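(* Let $A\in\{\mathbb Z,\mathbb R\}$ and $\Delta_2=\mathrm{conv}(\mathbf 0,e_1,e_2)$. Up to $A$-unimodular transformations there is exactly one unbounded two-dimensional closed convex set $C\subset\mathbb R^2$ which is $A$-$\Delta_2$-free and inclusion-maximal among $A$-$\Delta_2$-free closed convex sets, namely $C=[-1,1]\times\mathbb R$ if $A=\mathbb Z$ and $C=[0,1]\times\mathbb R$ if $A=\mathbb R$. In particular its lattice width is $2$ if $A=\mathbb Z$ and $1$ if $A=\mathbb R$.
   Context: An $A$-unimodular transformation is a map $T(x)=Mx+b$ with $M\in \mathrm{GL}_2(\mathbb Z)$ and $b\in A^2$; an $A$-unimodular copy of $X$ is $T(X)$. A convex set is $A$-$X$-free if its relative interior contains no $A$-unimodular copy of $X$. Lattice width: $\mathrm{width}(K)=\inf_{u\in(\mathbb Z^2)^*\setminus\{0\}}\sup_{x,y\in K}|u(x)-u(y)|$. *)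

From Stdlib Require Import Reals ZArith.
From Coquelicot Require Import Coquelicot.
Open Scope R_scope.

Definition pt := (R * R)%type.
Definition pset := pt -> Prop.

Definition padd (p q : pt) : pt := (fst p + fst q, snd p + snd q).
Definition pscale (t : R) (p : pt) : pt := (t * fst p, t * snd p).
Definition dist2 (p q : pt) : R :=
  sqrt ((fst p - fst q)^2 + (snd p - snd q)^2).

Definition set_sub (X Y : pset) : Prop := forall p, X p -> Y p.
Definition set_eq (X Y : pset) : Prop := forall p, X p <-> Y p.

Inductive coeffs := AZ | AR.
Definition in_A (A : coeffs) (x : R) : Prop :=
  match A with AZ => exists z : Z, x = IZR z | AR => True end.

Definition is_int (x : R) : Prop := exists z : Z, x = IZR z.

Record unimod := { m11 : Z; m12 : Z; m21 : Z; m22 : Z; b1 : R; b2 : R }.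
Definition is_unimod (A : coeffs) (T : unimod) : Prop :=
  (m11 T * m22 T - m12 T * m21 T = 1 \/ m11 T * m22 T - m12 T * m21 T = -1)%Z
  /\ in_A A (b1 T) /\ in_A A (b2 T).
Definition apply_unimod (T : unimod) (p : pt) : pt :=
  (IZR (m11 T) * fst p + IZR (m12 T) * snd p + b1 T,
   IZR (m21 T) * fst p + IZR (m22 T) * snd p + b2 T).
Definition image (T : unimod) (X : pset) : pset :=
  fun q => exists p, X p /\ q = apply_unimod T p.

Definition Delta2 : pset := fun p =>
  exists l0 l1 l2 : R, 0 <= l0 /\ 0 <= l1 /\ 0 <= l2 /\ l0 + l1 + l2 = 1 /\
    p = padd (padd (pscale l0 (0,0)) (pscale l1 (1,0))) (pscale l2 (0,1)).

Definition convex (K : pset) : Prop :=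
  forall x y t, K x -> K y -> 0 <= t <= 1 ->
    K (padd (pscale (1 - t) x) (pscale t y)).

Definition closed_set (K : pset) : Prop :=
  forall p, ~ K p -> exists eps, 0 < eps /\ forall q, dist2 p q < eps -> ~ K q.

Definition affine_set (S : pset) : Prop :=
  forall x y t, S x -> S y -> S (padd (pscale (1 - t) x) (pscale t y)).
Definition aff (K : pset) : pset :=
  fun p => forall S, affine_set S -> set_sub K S -> S p.

Definition relint (K : pset) : pset := fun x =>
  K x /\ exists eps, 0 < eps /\ forall y, aff K y -> dist2 x y < eps -> K y.

Definition free (A : coeffs) (X K : pset) : Prop :=
  ~ exists T, is_unimod A T /\ set_sub (image T X) (relint K).

Definition closed_convex (K : pset) : Prop := closed_set K /\ convex K.

Definition maximal_free (A : coeffs) (X C : pset) : Prop :=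
  closed_convex C /\ free A X C /\
  forall K, closed_convex K -> free A X K -> set_sub C K -> set_sub K C.

Definition unbounded (K : pset) : Prop :=
  ~ exists M, forall p, K p -> Rabs (fst p) <= M /\ Rabs (snd p) <= M.

Definition two_dim (K : pset) : Prop :=
  exists a b c, K a /\ K b /\ K c /\
    (fst b - fst a) * (snd c - snd a) - (snd b - snd a) * (fst c - fst a) <> 0.

Definition lin_spread (K : pset) (u1 u2 : R) : Rbar :=
  Rbar_lub (fun r => exists x y, K x /\ K y /\
    r = Finite (Rabs ((u1 * fst x + u2 * snd x) - (u1 * fst y + u2 * snd y)))).
Definition lattice_width (K : pset) : Rbar :=
  Rbar_glb (fun w => exists u1 u2, is_int u1 /\ is_int u2 /\
    ~ (u1 = 0 /\ u2 = 0) /\ w = lin_spread K u1 u2).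

Definition strip (A : coeffs) : pset := fun p =>
  match A with
  | AZ => -1 <= fst p <= 1
  | AR => 0 <= fst p <= 1
  end.
Definition strip_width (A : coeffs) : R :=
  match A with AZ => 2 | AR => 1 end.

(* It is free: the values of the strip coordinate at the vertices of a
   unimodular triangle differ by integers, not all zero, yet would lie in the open
   interval (-1, 1) with an integral value when A = Z, resp. in (0, 1) when A = R.
   It is maximal: a convex set containing it and a point outside contains an open
   slab wide enough to hold a unimodular triangle.
   Conversely, let C be two-dimensional, unbounded and maximal free.  After a
   quarter turn, C has points arbitrarily far out in the cone |y| <= x over an
   interior point, and a limit of their slopes gives a recession direction (1, s).
   If s is irrational, Kronecker's theorem puts three non-collinear lattice points
   deep inside C, and a convex set containing a lattice triangle contains a
   unimodular one.  If s = p/q in lowest terms, the functional p x - q y cannot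
   take values on both sides of an interval [k, k+1] with k in A, for otherwise
   the interior of C would contain a unimodular triangle with its edges along the
   level lines k and k+1; hence C lies in a unimodular image of the strip and
   maximality gives equality.  The lattice width of the strip is attained by the
   strip coordinate. *)

From Pilot Require Import Defs.
From Stdlib Require Import Reals ZArith Lra Lia Psatz Classical ClassicalEpsilon FunctionalExtensionality PropExtensionality.
From Coquelicot Require Import Coquelicot.
(* [Reals] has its own [closed_set]. *)
Import Pilot.Defs.
Open Scope R_scope.

(** * Squares and relative interior *)

Definition in_square (x : pt) (rho : R) (y : pt) : Prop :=
  Rabs (fst y - fst x) < rho /\ Rabs (snd y - snd x) < rho.

Definition square_in (K : pset) (x : pt) (rho : R) : Prop :=
  0 < rho /\ forall y, in_square x rho y -> K y.

Lemma Rabs_le_sqrt_sum_sq a b : Rabs a <= sqrt (a^2 + b^2).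
Proof. rewrite <- sqrt_Rsqr_abs. apply sqrt_le_1_alt. unfold Rsqr. nra. Qed.

Lemma sqrt_sum_sq_le_Rabs a b : sqrt (a^2 + b^2) <= Rabs a + Rabs b.
Proof.
  pose proof (Rabs_pos a); pose proof (Rabs_pos b).
  rewrite <- (sqrt_Rsqr (Rabs a + Rabs b)) by lra.
  apply sqrt_le_1_alt. unfold Rsqr. rewrite <- (pow2_abs a), <- (pow2_abs b). nra.
Qed.

Lemma dist2_lt_coord p q e : dist2 p q < e ->
  Rabs (fst q - fst p) < e /\ Rabs (snd q - snd p) < e.
Proof.
  unfold dist2; intros H.
  pose proof (Rabs_le_sqrt_sum_sq (fst p - fst q) (snd p - snd q)).
  pose proof (Rabs_le_sqrt_sum_sq (snd p - snd q) (fst p - fst q)).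
  rewrite Rplus_comm in H1. rewrite (Rabs_minus_sym (fst q)), (Rabs_minus_sym (snd q)). lra.
Qed.

Lemma coord_lt_dist2 p q e : Rabs (fst q - fst p) + Rabs (snd q - snd p) < e -> dist2 p q < e.
Proof.
  unfold dist2; intros H.
  pose proof (sqrt_sum_sq_le_Rabs (fst p - fst q) (snd p - snd q)).
  rewrite (Rabs_minus_sym (fst q)), (Rabs_minus_sym (snd q)) in H. lra.
Qed.

Lemma in_square_center x rho : 0 < rho -> in_square x rho x.
Proof. intros H. unfold in_square. rewrite !Rminus_diag, Rabs_R0. lra. Qed.

Lemma square_in_center K x rho : square_in K x rho -> K x.
Proof. intros [Hr HK]. apply HK, in_square_center, Hr. Qed.

Lemma square_in_relint K x rho : square_in K x rho -> relint K x.
Proof.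
  intros Hsq. split; [exact (square_in_center _ _ _ Hsq)|].
  destruct Hsq as [Hr HK]. exists rho. split; auto.
  intros y _ Hd. apply HK. apply dist2_lt_coord in Hd. exact Hd.
Qed.

Lemma ball_square_in K x e : 0 < e -> (forall y, dist2 x y < e -> K y) -> square_in K x (e/2).
Proof. intros He H. split; [lra|]. intros y [H1 H2]. apply H, coord_lt_dist2. lra. Qed.

Lemma square_in_le K x r1 r2 : 0 < r1 -> r1 <= r2 -> square_in K x r2 -> square_in K x r1.
Proof. intros H0 H [_ HK]. split; auto. intros y [H1 H2]. apply HK. split; lra. Qed.

Lemma square_in_incl K1 K2 x rho : set_sub K1 K2 -> square_in K1 x rho -> square_in K2 x rho.
Proof. intros Hs [Hr HK]. split; auto. Qed.

Lemma square_in_half K x r y : square_in K x r ->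
  Rabs (fst y - fst x) < r/2 -> Rabs (snd y - snd x) < r/2 -> square_in K y (r/2).
Proof.
  intros [Hr HK] H1 H2. split; [lra|]. intros z [Hz1 Hz2]. apply HK. split.
  - replace (fst z - fst x) with ((fst z - fst y) + (fst y - fst x)) by ring.
    eapply Rle_lt_trans; [apply Rabs_triang|lra].
  - replace (snd z - snd x) with ((snd z - snd y) + (snd y - snd x)) by ring.
    eapply Rle_lt_trans; [apply Rabs_triang|lra].
Qed.

Lemma convex_point K x y z t : convex K -> K x -> K y -> 0 <= t <= 1 ->
  z = ((1-t)*fst x + t*fst y, (1-t)*snd x + t*snd y) -> K z.
Proof. intros HK Hx Hy Ht ->. exact (HK _ _ t Hx Hy Ht). Qed.

Lemma convex_comb3 K x y z l0 l1 l2 : convex K ->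
  0 <= l0 -> 0 <= l1 -> 0 <= l2 -> l0 + l1 + l2 = 1 -> K x -> K y -> K z ->
  K (l0 * fst x + l1 * fst y + l2 * fst z, l0 * snd x + l1 * snd y + l2 * snd z).
Proof.
  intros HK H0 H1 H2 Hs Hx Hy Hz.
  destruct (Req_dec (l1 + l2) 0) as [E|E].
  - assert (l1 = 0) by lra; assert (l2 = 0) by lra; assert (l0 = 1) by lra; subst.
    destruct x as [x1 x2]. simpl. replace (1 * x1 + 0 * fst y + 0 * fst z) with x1 by ring.
    replace (1 * x2 + 0 * snd y + 0 * snd z) with x2 by ring. exact Hx.
  - set (w := ((l1 * fst y + l2 * fst z)/(l1+l2), (l1 * snd y + l2 * snd z)/(l1+l2))).
    assert (Hw : K w).
    { apply (convex_point K y z w (l2/(l1+l2))); auto.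
      - split; [apply Rdiv_le_0_compat; lra|].
        apply Rmult_le_reg_r with (l1+l2); [lra|].
        unfold Rdiv. rewrite Rmult_assoc, Rinv_l; lra.
      - unfold w; f_equal; field; lra. }
    apply (convex_point K x w _ (l1+l2)); auto; [lra|].
    replace l0 with (1 - l1 - l2) by lra. unfold w; simpl; f_equal; field; lra.
Qed.

(* A square around a convex combination is the same convex combination of
   translated squares. *)
Lemma square_in_comb2 K x y r1 r2 t : convex K ->
  square_in K x r1 -> square_in K y r2 -> 0 <= t <= 1 ->
  square_in K ((1-t)*fst x + t*fst y, (1-t)*snd x + t*snd y) (Rmin r1 r2).
Proof.
  intros HK [Hr1 Kx] [Hr2 Ky] Ht. split; [apply Rmin_pos; auto|].
  intros z [Hz1 Hz2]; simpl in *.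
  pose proof (Rmin_l r1 r2); pose proof (Rmin_r r1 r2).
  set (d1 := fst z - ((1 - t) * fst x + t * fst y)) in *.
  set (d2 := snd z - ((1 - t) * snd x + t * snd y)) in *.
  apply (convex_point K (fst x + d1, snd x + d2) (fst y + d1, snd y + d2) z t HK); auto.
  - apply Kx. unfold in_square; simpl. ring_simplify (fst x + d1 - fst x). ring_simplify (snd x + d2 - snd x). lra.
  - apply Ky. unfold in_square; simpl. ring_simplify (fst y + d1 - fst y). ring_simplify (snd y + d2 - snd y). lra.
  - destruct z; unfold d1, d2; simpl; f_equal; ring.
Qed.

Lemma square_in_comb3 K x y z r l0 l1 l2 : convex K ->
  0 <= l0 -> 0 <= l1 -> 0 <= l2 -> l0 + l1 + l2 = 1 ->
  square_in K x r -> square_in K y r -> square_in K z r ->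
  square_in K (l0 * fst x + l1 * fst y + l2 * fst z, l0 * snd x + l1 * snd y + l2 * snd z) r.
Proof.
  intros HK H0 H1 H2 Hs [Hr Kx] [_ Ky] [_ Kz]. split; auto.
  intros w [Hw1 Hw2]; simpl in *.
  set (d1 := fst w - (l0 * fst x + l1 * fst y + l2 * fst z)) in *.
  set (d2 := snd w - (l0 * snd x + l1 * snd y + l2 * snd z)) in *.
  set (sh := fun u : pt => (fst u + d1, snd u + d2)).
  replace w with (l0 * fst (sh x) + l1 * fst (sh y) + l2 * fst (sh z),
                  l0 * snd (sh x) + l1 * snd (sh y) + l2 * snd (sh z)).
  - assert (Hsh : forall u, in_square u r (sh u)).
    { intros u. unfold in_square, sh; simpl.
      ring_simplify (fst u + d1 - fst u). ring_simplify (snd u + d2 - snd u). lra. }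
    apply convex_comb3; auto.
  - destruct w; unfold sh, d1, d2; simpl; f_equal; nra.
Qed.

Lemma square_in_toward K s p rho mu : convex K ->
  square_in K s rho -> K p -> 0 < mu <= 1 ->
  square_in K (mu * fst s + (1-mu) * fst p, mu * snd s + (1-mu) * snd p) (mu * rho).
Proof.
  intros HK [Hr Ks] Hp Hmu. split; [nra|].
  intros y [Hy1 Hy2]; simpl in *.
  set (e1 := fst y - (mu * fst s + (1 - mu) * fst p)) in *.
  set (e2 := snd y - (mu * snd s + (1 - mu) * snd p)) in *.
  apply (convex_point K (fst s + e1/mu, snd s + e2/mu) p y (1-mu) HK); [| |lra|].
  - apply Ks. unfold in_square; simpl.
    replace (fst s + e1 / mu - fst s) with (e1 / mu) by ring.
    replace (snd s + e2 / mu - snd s) with (e2 / mu) by ring.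
    unfold Rdiv. rewrite !Rabs_mult, !Rabs_inv, (Rabs_right mu) by lra.
    split; apply Rmult_lt_reg_r with mu; try lra; rewrite Rmult_assoc, Rinv_l; lra.
  - exact Hp.
  - unfold e1, e2; destruct y; simpl; f_equal; field; lra.
Qed.

Lemma aff_two_dim K a b c : K a -> K b -> K c ->
  (fst b - fst a) * (snd c - snd a) - (snd b - snd a) * (fst c - fst a) <> 0 ->
  forall p, aff K p.
Proof.
  intros Ha Hb Hc Hdet p S HS Hsub.
  set (D := (fst b - fst a) * (snd c - snd a) - (snd b - snd a) * (fst c - fst a)) in *.
  set (s := ((fst p - fst a) * (snd c - snd a) - (snd p - snd a) * (fst c - fst a)) / D).
  set (t := ((fst b - fst a) * (snd p - snd a) - (snd b - snd a) * (fst p - fst a)) / D).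
  assert (HX : S (padd (pscale (1 - 2*s) a) (pscale (2*s) b))) by (apply HS; auto).
  assert (HY : S (padd (pscale (1 - 2*t) a) (pscale (2*t) c))) by (apply HS; auto).
  pose proof (HS _ _ (1/2) HX HY) as HZ.
  match goal with HZ : S ?z |- _ => replace p with z; auto end.
  destruct p, a, b, c. unfold padd, pscale, s, t, D in *; simpl in *. f_equal; field; auto.
Qed.

Lemma relint_square_in K a b c x : K a -> K b -> K c ->
  (fst b - fst a) * (snd c - snd a) - (snd b - snd a) * (fst c - fst a) <> 0 ->
  relint K x -> exists rho, square_in K x rho.
Proof.
  intros Ha Hb Hc Hd [Hx [e [He H]]]. exists (e/2). apply ball_square_in; auto.
  intros y Hy. apply H; auto. exact (aff_two_dim K a b c Ha Hb Hc Hd y).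
Qed.

Lemma Rabs_lin_le a b x y : Rabs (a * x + b * y) <= (Rabs a + Rabs b) * (Rabs x + Rabs y).
Proof.
  eapply Rle_trans; [apply Rabs_triang|]. rewrite !Rabs_mult.
  pose proof (Rabs_pos a); pose proof (Rabs_pos b); pose proof (Rabs_pos x); pose proof (Rabs_pos y).
  nra.
Qed.

(* The centroid of a nondegenerate triangle in [K] is the centre of a square in [K]:
   nearby points have barycentric coordinates close to 1/3. *)
Lemma two_dim_square_in K : convex K -> two_dim K -> exists g r, square_in K g r.
Proof.
  intros HK [a [b [c [Ha [Hb [Hc HD]]]]]].
  set (D := (fst b - fst a) * (snd c - snd a) - (snd b - snd a) * (fst c - fst a)) in *.
  set (M := Rabs (fst b - fst a) + Rabs (snd b - snd a) + Rabs (fst c - fst a) + Rabs (snd c - snd a) + 1).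
  assert (HM : 1 <= M) by (unfold M; pose proof (Rabs_pos (fst b - fst a)); pose proof (Rabs_pos (snd b - snd a));
    pose proof (Rabs_pos (fst c - fst a)); pose proof (Rabs_pos (snd c - snd a)); lra).
  assert (HDp : 0 < Rabs D) by (apply Rabs_pos_lt; auto).
  set (g := ((fst a + fst b + fst c)/3, (snd a + snd b + snd c)/3)).
  exists g, (Rabs D / (12 * M)). split; [apply Rdiv_lt_0_compat; lra|].
  intros y [Hy1 Hy2].
  set (s := ((fst y - fst a) * (snd c - snd a) - (snd y - snd a) * (fst c - fst a)) / D).
  set (t := ((fst b - fst a) * (snd y - snd a) - (snd b - snd a) * (fst y - fst a)) / D).
  assert (Hsmall : forall u v, Rabs u + Rabs v <= M ->
     Rabs ((u * (fst y - fst g) + v * (snd y - snd g)) / D) < 1/6).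
  { intros u v Huv. unfold Rdiv. rewrite Rabs_mult, Rabs_inv.
    apply Rmult_lt_reg_r with (Rabs D); auto. rewrite Rmult_assoc, Rinv_l, Rmult_1_r by lra.
    eapply Rle_lt_trans; [apply Rabs_lin_le|].
    pose proof (Rabs_pos (fst y - fst g)); pose proof (Rabs_pos (snd y - snd g)).
    apply Rle_lt_trans with (M * (Rabs (fst y - fst g) + Rabs (snd y - snd g))).
    { apply Rmult_le_compat_r; lra. }
    apply Rlt_le_trans with (M * (2 * (Rabs D / (12 * M)))).
    { apply Rmult_lt_compat_l; lra. }
    replace (M * (2 * (Rabs D / (12 * M)))) with (Rabs D / 6) by (field; lra). lra. }
  assert (Hs : Rabs (s - 1/3) < 1/6).
  { replace (s - 1/3) with (((snd c - snd a) * (fst y - fst g) + (- (fst c - fst a)) * (snd y - snd g)) / D)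
      by (unfold s, g, D; simpl; field; exact HD).
    apply Hsmall. rewrite Rabs_Ropp. unfold M.
    pose proof (Rabs_pos (fst b - fst a)); pose proof (Rabs_pos (snd b - snd a)); lra. }
  assert (Ht : Rabs (t - 1/3) < 1/6).
  { replace (t - 1/3) with (((- (snd b - snd a)) * (fst y - fst g) + (fst b - fst a) * (snd y - snd g)) / D)
      by (unfold t, g, D; simpl; field; exact HD).
    apply Hsmall. rewrite Rabs_Ropp. unfold M.
    pose proof (Rabs_pos (fst c - fst a)); pose proof (Rabs_pos (snd c - snd a)); lra. }
  apply Rabs_def2 in Hs. apply Rabs_def2 in Ht.
  replace y with ((1 - s - t) * fst a + s * fst b + t * fst c, (1 - s - t) * snd a + s * snd b + t * snd c).
  - apply convex_comb3; auto; lra.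
  - destruct y as [y1 y2]. unfold s, t, D; simpl. f_equal; field; auto.
Qed.

Lemma IZR_neq0_Rabs_ge1 z : IZR z <> 0 -> 1 <= Rabs (IZR z).
Proof.
  intros H. rewrite <- abs_IZR. apply IZR_le.
  assert (z <> 0%Z) by (intros ->; apply H; reflexivity). lia.
Qed.

Lemma IZR_between_m1_1 z : -1 < IZR z < 1 -> z = 0%Z.
Proof. intros [H1 H2]. apply lt_IZR in H1. apply lt_IZR in H2. lia. Qed.

(** * Unimodular coordinates *)

Definition detZ (T : unimod) : Z := (m11 T * m22 T - m12 T * m21 T)%Z.
Definition detR (T : unimod) : R := IZR (detZ T).

Lemma detR_eq T : detR T = IZR (m11 T) * IZR (m22 T) - IZR (m12 T) * IZR (m21 T).
Proof. unfold detR, detZ. rewrite minus_IZR, !mult_IZR. ring. Qed.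

Lemma detR_sq A T : is_unimod A T -> detR T * detR T = 1.
Proof. intros [[H|H] _]; unfold detR, detZ; rewrite H; simpl; lra. Qed.

Lemma detR_neq0 A T : is_unimod A T -> detR T <> 0.
Proof. intros HT E. pose proof (detR_sq A T HT) as H. rewrite E in H. lra. Qed.

Lemma Rabs_detR A T : is_unimod A T -> Rabs (detR T) = 1.
Proof.
  intros HT. pose proof (detR_sq A T HT).
  destruct (Rle_dec 0 (detR T)); [rewrite Rabs_right|rewrite Rabs_left]; nra.
Qed.

(* [(coord1 T q, coord2 T q)] is [T^-1 q]; since [det T = ±1], the inverse of the
   linear part is [det T] times its adjugate. *)
Definition coord1 T (q : pt) : R :=
  detR T * (IZR (m22 T) * (fst q - b1 T) - IZR (m12 T) * (snd q - b2 T)).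
Definition coord2 T (q : pt) : R :=
  detR T * (- IZR (m21 T) * (fst q - b1 T) + IZR (m11 T) * (snd q - b2 T)).

Section Coordinates.
Variables (A : coeffs) (T : unimod).
Hypothesis HT : is_unimod A T.

Lemma coord1_apply p : coord1 T (apply_unimod T p) = fst p.
Proof.
  unfold coord1, apply_unimod; cbn [fst snd].
  transitivity (detR T * detR T * fst p); [rewrite (detR_eq T) at 2; ring|].
  rewrite (detR_sq A T HT); ring.
Qed.

Lemma coord2_apply p : coord2 T (apply_unimod T p) = snd p.
Proof.
  unfold coord2, apply_unimod; cbn [fst snd].
  transitivity (detR T * detR T * snd p); [rewrite (detR_eq T) at 2; ring|].
  rewrite (detR_sq A T HT); ring.
Qed.

Lemma apply_coords q : apply_unimod T (coord1 T q, coord2 T q) = q.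
Proof.
  pose proof (detR_sq A T HT) as Hd.
  destruct q as [q1 q2]. unfold coord1, coord2, apply_unimod; cbn [fst snd]. f_equal.
  - transitivity (detR T * (IZR (m11 T) * IZR (m22 T) - IZR (m12 T) * IZR (m21 T)) * (q1 - b1 T) + b1 T);
      [ring|rewrite <- detR_eq, Hd; ring].
  - transitivity (detR T * (IZR (m11 T) * IZR (m22 T) - IZR (m12 T) * IZR (m21 T)) * (q2 - b2 T) + b2 T);
      [ring|rewrite <- detR_eq, Hd; ring].
Qed.

Lemma image_unimodE X q : image T X q <-> X (coord1 T q, coord2 T q).
Proof.
  split.
  - intros [p [Hp ->]]. rewrite coord1_apply, coord2_apply. destruct p; exact Hp.
  - intros H. exists (coord1 T q, coord2 T q). rewrite apply_coords. auto.
Qed.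

Lemma coord1_lipschitz q q' :
  Rabs (coord1 T q' - coord1 T q) <=
  (Rabs (IZR (m22 T)) + Rabs (IZR (m12 T))) * (Rabs (fst q' - fst q) + Rabs (snd q' - snd q)).
Proof.
  replace (coord1 T q' - coord1 T q)
    with (detR T * (IZR (m22 T) * (fst q' - fst q) + (- IZR (m12 T)) * (snd q' - snd q)))
    by (unfold coord1; ring).
  rewrite Rabs_mult, (Rabs_detR A T HT), Rmult_1_l, <- (Rabs_Ropp (IZR (m12 T))).
  apply Rabs_lin_le.
Qed.

Lemma coord1_continuous q e : 0 < e -> exists d, 0 < d /\ forall q',
  Rabs (fst q' - fst q) < d -> Rabs (snd q' - snd q) < d -> Rabs (coord1 T q' - coord1 T q) < e.
Proof.
  intros He. set (M := Rabs (IZR (m22 T)) + Rabs (IZR (m12 T))).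
  assert (HM : 0 <= M) by (unfold M; pose proof (Rabs_pos (IZR (m22 T))); pose proof (Rabs_pos (IZR (m12 T))); lra).
  exists (e / (2 * (M + 1))). split; [apply Rdiv_lt_0_compat; lra|].
  intros q' H1 H2. eapply Rle_lt_trans; [apply coord1_lipschitz|]. fold M.
  apply Rle_lt_trans with (M * (e / (M + 1))).
  - apply Rmult_le_compat_l; [lra|]. replace (e / (M + 1)) with (e / (2 * (M + 1)) + e / (2 * (M + 1))) by (field; lra). lra.
  - replace e with ((M + 1) * (e / (M + 1))) at 2 by (field; lra).
    apply Rmult_lt_compat_r; [apply Rdiv_lt_0_compat|]; lra.
Qed.

End Coordinates.

Lemma coord1_comb T x y a : coord1 T ((1-a) * fst x + a * fst y, (1-a) * snd x + a * snd y) =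
  (1-a) * coord1 T x + a * coord1 T y.
Proof. unfold coord1; simpl; ring. Qed.

(** * Strips *)

Definition strip_lo (A : coeffs) : R := match A with AZ => -1 | AR => 0 end.

Lemma strip_lo_le0 A : strip_lo A <= 0.
Proof. destruct A; simpl; lra. Qed.

Lemma strip_width_lo A : strip_width A = 1 - strip_lo A.
Proof. destruct A; simpl; lra. Qed.

Lemma image_stripE A T q : is_unimod A T ->
  image T (strip A) q <-> strip_lo A <= coord1 T q <= 1.
Proof. intros HT. rewrite (image_unimodE A T HT). destruct A; simpl; tauto. Qed.

Lemma Delta2_vertices : Delta2 (0,0) /\ Delta2 (1,0) /\ Delta2 (0,1).
Proof.
  split; [|split]; [exists 1, 0, 0|exists 0, 1, 0|exists 0, 0, 1];
    unfold padd, pscale; simpl; repeat split; try lra; f_equal; ring.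
Qed.

(* A form of freeness that does not involve the affine hull; for convex sets it
   follows from [free]. *)
Definition vertex_free (A : coeffs) (K : pset) : Prop :=
  ~ exists T rho, is_unimod A T /\ square_in K (apply_unimod T (0,0)) rho /\
    square_in K (apply_unimod T (1,0)) rho /\ square_in K (apply_unimod T (0,1)) rho.

Lemma free_vertex_free A K : convex K -> free A Delta2 K -> vertex_free A K.
Proof.
  intros HK Hf [T [rho [HT [S0 [S1 S2]]]]]. apply Hf. exists T. split; auto.
  intros q [p [[l0 [l1 [l2 [H0 [H1 [H2 [Hs ->]]]]]]] ->]].
  apply (square_in_relint K _ rho).
  pose proof (square_in_comb3 K _ _ _ rho l0 l1 l2 HK H0 H1 H2 Hs S0 S1 S2) as S.
  match goal with S : square_in K ?z rho |- square_in K ?w rho => replace w with z; auto end.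
  unfold apply_unimod, padd, pscale; simpl. replace l0 with (1 - l1 - l2) by lra. f_equal; ring.
Qed.

Definition shift_unimod (T : unimod) (g : R) : unimod :=
  {| m11 := m11 T; m12 := m12 T; m21 := m21 T; m22 := m22 T;
     b1 := b1 T + g * IZR (m11 T); b2 := b2 T + g * IZR (m21 T) |}.

Lemma apply_shift_unimod T g u : apply_unimod (shift_unimod T g) u = apply_unimod T (fst u + g, snd u).
Proof. unfold apply_unimod, shift_unimod; simpl. f_equal; ring. Qed.

Lemma shift_unimod_unimod A T g : is_unimod A T -> in_A A g -> is_unimod A (shift_unimod T g).
Proof.
  intros [Hd [H1 H2]] Hg. split; [exact Hd|]. destruct A; simpl in *; auto.
  destruct H1 as [z1 E1], H2 as [z2 E2], Hg as [k Ek]. split.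
  - exists (z1 + k * m11 T)%Z. rewrite plus_IZR, mult_IZR, E1, Ek; ring.
  - exists (z2 + k * m21 T)%Z. rewrite plus_IZR, mult_IZR, E2, Ek; ring.
Qed.

Lemma slab_not_vertex_free A T K a b g : is_unimod A T ->
  (forall q, a < coord1 T q < b -> exists rho, square_in K q rho) ->
  in_A A g -> a < g -> g + 1 < b -> ~ vertex_free A K.
Proof.
  intros HT Hslab Hg H1 H2 Hf. apply Hf.
  set (T' := shift_unimod T g).
  assert (Hv : forall u, 0 <= fst u <= 1 -> exists rho, square_in K (apply_unimod T' u) rho).
  { intros u Hu. apply Hslab. unfold T'. rewrite apply_shift_unimod, (coord1_apply A T HT). simpl. lra. }
  destruct (Hv (0,0)) as [r0 S0]; [simpl; lra|].
  destruct (Hv (1,0)) as [r1 S1]; [simpl; lra|].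
  destruct (Hv (0,1)) as [r2 S2]; [simpl; lra|].
  pose proof (proj1 S0); pose proof (proj1 S1); pose proof (proj1 S2).
  set (r := Rmin r0 (Rmin r1 r2)).
  assert (0 < r) by (unfold r; repeat apply Rmin_pos; auto).
  assert (r <= r0) by apply Rmin_l.
  assert (r <= r1) by (eapply Rle_trans; [apply Rmin_r|apply Rmin_l]).
  assert (r <= r2) by (eapply Rle_trans; [apply Rmin_r|apply Rmin_r]).
  exists T', r. split; [apply shift_unimod_unimod; auto|].
  split; [|split]; (eapply square_in_le; [| |eassumption]); assumption.
Qed.

Section StripImage.
Variables (A : coeffs) (T : unimod).
Hypothesis HT : is_unimod A T.
Let L := image T (strip A).

Lemma strip_image_apply u : strip_lo A <= fst u <= 1 -> L (apply_unimod T u).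
Proof. intros H. unfold L. rewrite (image_stripE A T _ HT), (coord1_apply A T HT). exact H. Qed.

Lemma strip_image_closed : closed_set L.
Proof.
  intros q Hq. unfold L in Hq. rewrite (image_stripE A T q HT) in Hq.
  assert (Hgap : exists e, 0 < e /\ (coord1 T q + e < strip_lo A \/ 1 < coord1 T q - e)).
  { destruct (Rlt_dec (coord1 T q) (strip_lo A)).
    - exists ((strip_lo A - coord1 T q)/2). split; lra.
    - exists ((coord1 T q - 1)/2). split; lra. }
  destruct Hgap as [e [He Hgap]].
  destruct (coord1_continuous A T HT q e He) as [d [Hd Hc]].
  exists d. split; auto. intros q' Hq' Hin. apply dist2_lt_coord in Hq'. destruct Hq' as [H1 H2].
  specialize (Hc q' H1 H2). apply Rabs_def2 in Hc.
  unfold L in Hin. rewrite (image_stripE A T q' HT) in Hin. lra.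
Qed.

Lemma strip_image_convex : convex L.
Proof.
  intros x y t Hx Hy Ht. unfold L in *.
  apply (image_stripE A T _ HT) in Hx. apply (image_stripE A T _ HT) in Hy.
  apply (image_stripE A T _ HT).
  change (padd (pscale (1 - t) x) (pscale t y))
    with ((1-t) * fst x + t * fst y, (1-t) * snd x + t * snd y).
  rewrite coord1_comb. nra.
Qed.

Lemma strip_image_two_dim : two_dim L.
Proof.
  pose proof (strip_lo_le0 A).
  exists (apply_unimod T (0,0)), (apply_unimod T (1,0)), (apply_unimod T (0,1)).
  repeat split; try (apply strip_image_apply; simpl; lra).
  unfold apply_unimod; simpl. intros E. apply (detR_neq0 A T HT). rewrite detR_eq. lra.
Qed.

Lemma strip_image_unbounded : unbounded L.
Proof.
  intros [M HM]. pose proof (strip_lo_le0 A).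
  set (y := Rabs M + Rabs (b1 T) + Rabs (b2 T) + 1).
  assert (Hy : 0 < y) by (unfold y; pose proof (Rabs_pos M); pose proof (Rabs_pos (b1 T)); pose proof (Rabs_pos (b2 T)); lra).
  destruct (HM (apply_unimod T (0, y))) as [H1 H2]; [apply strip_image_apply; simpl; lra|].
  unfold apply_unimod in H1, H2; simpl in H1, H2. rewrite Rmult_0_r, Rplus_0_l in H1, H2.
  assert (Hfar : forall m b, IZR m <> 0 -> Rabs b <= y - Rabs M - 1 -> M < Rabs (IZR m * y + b)).
  { intros m b Hm Hb. apply IZR_neq0_Rabs_ge1 in Hm.
    pose proof (Rabs_triang_inv (IZR m * y) (- b)) as Ht.
    rewrite Rabs_Ropp, Rabs_mult, (Rabs_right y) in Ht by lra.
    replace (IZR m * y - - b) with (IZR m * y + b) in Ht by ring.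
    pose proof (Rle_abs M). nra. }
  destruct (Req_dec (IZR (m12 T)) 0) as [E|E].
  - assert (E2 : IZR (m22 T) <> 0).
    { intros E2. apply (detR_neq0 A T HT). rewrite detR_eq, E, E2. ring. }
    pose proof (Hfar _ (b2 T) E2 ltac:(unfold y; pose proof (Rabs_pos (b1 T)); lra)). lra.
  - pose proof (Hfar _ (b1 T) E ltac:(unfold y; pose proof (Rabs_pos (b2 T)); lra)). lra.
Qed.

Lemma in_square_along_coord1 x rho : 0 < rho -> exists eta, 0 < eta /\
  forall g, Rabs g <= eta -> in_square x rho (apply_unimod T (coord1 T x + g, coord2 T x)).
Proof.
  intros Hr. set (W := Rabs (IZR (m11 T)) + Rabs (IZR (m21 T)) + 1).
  assert (HW : 1 <= W) by (unfold W; pose proof (Rabs_pos (IZR (m11 T))); pose proof (Rabs_pos (IZR (m21 T))); lra).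
  exists (rho / (2 * W)). split; [apply Rdiv_lt_0_compat; lra|]. intros g Hg.
  assert (Hsmall : forall m, Rabs m <= W -> Rabs (g * m) < rho).
  { intros m Hm. rewrite Rabs_mult.
    apply Rle_lt_trans with (rho / (2 * W) * W).
    - apply Rmult_le_compat; auto using Rabs_pos.
    - replace (rho / (2 * W) * W) with (rho/2) by (field; lra). lra. }
  rewrite <- (apply_coords A T HT x) at 1. unfold in_square, apply_unimod; simpl.
  replace (IZR (m11 T) * (coord1 T x + g) + IZR (m12 T) * coord2 T x + b1 T -
           (IZR (m11 T) * coord1 T x + IZR (m12 T) * coord2 T x + b1 T)) with (g * IZR (m11 T)) by ring.
  replace (IZR (m21 T) * (coord1 T x + g) + IZR (m22 T) * coord2 T x + b2 T -
           (IZR (m21 T) * coord1 T x + IZR (m22 T) * coord2 T x + b2 T)) with (g * IZR (m21 T)) by ring.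
  split; apply Hsmall; unfold W; pose proof (Rabs_pos (IZR (m11 T))); pose proof (Rabs_pos (IZR (m21 T))); lra.
Qed.

Lemma square_in_strip_image K x rho : set_sub K L -> square_in K x rho ->
  strip_lo A < coord1 T x < 1.
Proof.
  intros Hs [Hr HK]. destruct (in_square_along_coord1 x rho Hr) as [eta [He Hsq]].
  assert (Hin : forall g, Rabs g <= eta -> strip_lo A <= coord1 T x + g <= 1).
  { intros g Hg. pose proof (Hs _ (HK _ (Hsq g Hg))) as HL. unfold L in HL.
    rewrite (image_stripE A T _ HT), (coord1_apply A T HT) in HL. exact HL. }
  pose proof (Hin eta ltac:(rewrite Rabs_right; lra)).
  pose proof (Hin (- eta) ltac:(rewrite Rabs_Ropp, Rabs_right; lra)). lra.
Qed.

Lemma strip_image_square_in q : strip_lo A < coord1 T q < 1 -> exists rho, square_in L q rho.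
Proof.
  intros H. set (e := Rmin (coord1 T q - strip_lo A) (1 - coord1 T q)).
  assert (He : 0 < e) by (unfold e; apply Rmin_pos; lra).
  pose proof (Rmin_l (coord1 T q - strip_lo A) (1 - coord1 T q)).
  pose proof (Rmin_r (coord1 T q - strip_lo A) (1 - coord1 T q)). fold e in H0, H1.
  destruct (coord1_continuous A T HT q e He) as [d [Hd Hc]].
  exists d. split; auto. intros y [H2 H3]. specialize (Hc y H2 H3). apply Rabs_def2 in Hc.
  unfold L. rewrite (image_stripE A T _ HT). lra.
Qed.

End StripImage.

Lemma row_mul_invertible_neq0 (k1 k2 a b c d : Z) :
  ~ (k1 = 0 /\ k2 = 0)%Z -> (a*d - b*c <> 0)%Z -> ~ (k1 * a + k2 * c = 0 /\ k1 * b + k2 * d = 0)%Z.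
Proof.
  intros Hk Hd [E1 E2].
  assert (H1 : (k1 * (a*d - b*c) = 0)%Z).
  { replace (k1 * (a*d - b*c))%Z with ((k1 * a + k2 * c) * d - (k1 * b + k2 * d) * c)%Z by ring.
    rewrite E1, E2; ring. }
  assert (H2 : (k2 * (a*d - b*c) = 0)%Z).
  { replace (k2 * (a*d - b*c))%Z with ((k1 * b + k2 * d) * a - (k1 * a + k2 * c) * b)%Z by ring.
    rewrite E1, E2; ring. }
  apply Z.mul_eq_0 in H1. apply Z.mul_eq_0 in H2. tauto.
Qed.

(* [coord1 T \o T'] is an affine map whose linear part is a nonzero integer row:
   the first row of [T^-1 T']. *)
Lemma coord1_comp_unimod A A' T T' : is_unimod A T -> is_unimod A' T' ->
  exists al be : Z, ~ (al = 0 /\ be = 0)%Z /\ forall u,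
    coord1 T (apply_unimod T' u) = coord1 T (apply_unimod T' (0,0)) + IZR al * fst u + IZR be * snd u.
Proof.
  intros HT HT'.
  exists (detZ T * (m22 T * m11 T' - m12 T * m21 T'))%Z, (detZ T * (m22 T * m12 T' - m12 T * m22 T'))%Z.
  split.
  - destruct HT as [Hd _], HT' as [Hd' _]. unfold detZ.
    intros [E1 E2]. apply Z.mul_eq_0 in E1. apply Z.mul_eq_0 in E2.
    apply (row_mul_invertible_neq0 (m22 T) (- m12 T) (m11 T') (m12 T') (m21 T') (m22 T')); lia.
  - intros u. rewrite !mult_IZR, !minus_IZR, !mult_IZR. fold (detR T).
    unfold coord1, apply_unimod; cbn [fst snd]. ring.
Qed.

Lemma coord1_integral T q : is_unimod AZ T -> is_int (fst q) -> is_int (snd q) -> is_int (coord1 T q).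
Proof.
  intros [_ [[z1 E1] [z2 E2]]] [x Ex] [y Ey].
  exists (detZ T * (m22 T * (x - z1) - m12 T * (y - z2)))%Z.
  unfold coord1, detR. rewrite E1, E2, Ex, Ey. repeat rewrite ?mult_IZR, ?minus_IZR. ring.
Qed.

Lemma strip_image_free A T : is_unimod A T -> free A Delta2 (image T (strip A)).
Proof.
  intros HT [T' [HT' Hsub]].
  destruct (strip_image_two_dim A T HT) as [a [b [c [Ha [Hb [Hc Hdet]]]]]].
  assert (Hv : forall u, Delta2 u -> strip_lo A < coord1 T (apply_unimod T' u) < 1).
  { intros u Hu. assert (Hr : relint (image T (strip A)) (apply_unimod T' u)) by (apply Hsub; exists u; auto).
    destruct (relint_square_in _ a b c _ Ha Hb Hc Hdet Hr) as [rho Hrho].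
    eapply square_in_strip_image; eauto. intros x; auto. }
  destruct Delta2_vertices as [D0 [D1 D2]].
  pose proof (Hv _ D0) as V0. pose proof (Hv _ D1) as V1. pose proof (Hv _ D2) as V2.
  destruct (coord1_comp_unimod A A T T' HT HT') as [al [be [Hnz Hlin]]].
  rewrite Hlin in V1, V2. simpl in V1, V2.
  set (e0 := coord1 T (apply_unimod T' (0, 0))) in *.
  apply Hnz. destruct A; simpl in V0, V1, V2.
  - destruct (coord1_integral T (apply_unimod T' (0,0)) HT) as [z Ez].
    + destruct HT' as [_ [[y1 Hy1] _]]. exists (m11 T' * 0 + m12 T' * 0 + y1)%Z.
      unfold apply_unimod; simpl. rewrite Hy1, !plus_IZR, !mult_IZR. simpl. ring.
    + destruct HT' as [_ [_ [y2 Hy2]]]. exists (m21 T' * 0 + m22 T' * 0 + y2)%Z.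
      unfold apply_unimod; simpl. rewrite Hy2, !plus_IZR, !mult_IZR. simpl. ring.
    + fold e0 in Ez. rewrite Ez in V0. pose proof (IZR_between_m1_1 z V0) as Z0.
      rewrite Ez, Z0 in V1, V2. split; apply IZR_between_m1_1; lra.
  - split; apply IZR_between_m1_1; lra.
Qed.

Section Maximality.
Variables (A : coeffs) (T : unimod) (K : pset) (p : pt).
Hypotheses (HT : is_unimod A T) (HK : convex K) (HLK : set_sub (image T (strip A)) K) (Hp : K p).
Let mid := (strip_lo A + 1) / 2.

(* [q] lies on a segment from [p] to a point [s] of the central line of the strip,
   around which [K] contains a square. *)
Lemma square_in_toward_outer_point q :
  (mid <= coord1 T q < coord1 T p \/ coord1 T p < coord1 T q <= mid) ->
  exists rho, square_in K q rho.
Proof.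
  intros Hq. pose proof (strip_lo_le0 A).
  set (lam := (coord1 T q - mid) / (coord1 T p - mid)).
  assert (Hlam : 0 <= lam < 1).
  { unfold lam. destruct Hq as [Hq|Hq].
    - split; [apply Rdiv_le_0_compat; lra|]. apply Rmult_lt_reg_r with (coord1 T p - mid); [lra|].
      unfold Rdiv; rewrite Rmult_assoc, Rinv_l; lra.
    - replace ((coord1 T q - mid) / (coord1 T p - mid)) with ((mid - coord1 T q) / (mid - coord1 T p))
        by (field; lra).
      split; [apply Rdiv_le_0_compat; lra|]. apply Rmult_lt_reg_r with (mid - coord1 T p); [lra|].
      unfold Rdiv; rewrite Rmult_assoc, Rinv_l; lra. }
  assert (Hcq : coord1 T q = (1-lam) * mid + lam * coord1 T p)
    by (unfold lam; field; destruct Hq; lra).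
  set (a := - lam / (1 - lam)).
  set (s := ((1-a) * fst q + a * fst p, (1-a) * snd q + a * snd p)).
  assert (Es : coord1 T s = mid) by (unfold s; rewrite coord1_comb, Hcq; unfold a; field; lra).
  destruct (strip_image_square_in A T HT s) as [rho Hs]; [rewrite Es; unfold mid; lra|].
  exists ((1-lam) * rho).
  pose proof (square_in_toward K s p rho (1-lam) HK (square_in_incl _ _ _ _ HLK Hs) Hp ltac:(lra)) as S.
  match goal with S : square_in K ?z _ |- _ => replace q with z; auto end.
  unfold s, a; destruct q; simpl. f_equal; field; lra.
Qed.

Lemma outer_point_not_vertex_free : ~ strip_lo A <= coord1 T p <= 1 -> ~ vertex_free A K.
Proof.
  intros Hout. pose proof (strip_lo_le0 A).
  assert (Hstrip : forall q, strip_lo A < coord1 T q < 1 -> exists rho, square_in K q rho).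
  { intros q Hq. destruct (strip_image_square_in A T HT q Hq) as [rho Hr].
    exists rho. eapply square_in_incl; eauto. }
  destruct (Rlt_dec 1 (coord1 T p)) as [Hgt|Hle].
  - assert (Hslab : forall q, strip_lo A < coord1 T q < coord1 T p -> exists rho, square_in K q rho).
    { intros q Hq. destruct (Rlt_dec (coord1 T q) mid).
      - apply Hstrip. unfold mid in *; lra.
      - apply square_in_toward_outer_point. lra. }
    destruct A.
    + apply (slab_not_vertex_free AZ T K _ _ 0 HT Hslab); [exists 0%Z; reflexivity| |]; simpl in *; lra.
    + apply (slab_not_vertex_free AR T K _ _ ((coord1 T p - 1)/2) HT Hslab); [exact I| |]; simpl in *; lra.
  - assert (Hslab : forall q, coord1 T p < coord1 T q < 1 -> exists rho, square_in K q rho).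
    { intros q Hq. destruct (Rlt_dec mid (coord1 T q)).
      - apply Hstrip. unfold mid in *; lra.
      - apply square_in_toward_outer_point. lra. }
    destruct A.
    + apply (slab_not_vertex_free AZ T K _ _ (-1) HT Hslab); [exists (-1)%Z; reflexivity| |]; simpl in *; lra.
    + apply (slab_not_vertex_free AR T K _ _ (coord1 T p / 2) HT Hslab); [exact I| |]; simpl in *; lra.
Qed.

End Maximality.

Lemma strip_image_maximal A T K : is_unimod A T -> closed_convex K -> free A Delta2 K ->
  set_sub (image T (strip A)) K -> set_sub K (image T (strip A)).
Proof.
  intros HT [_ HK] Hf HLK p Hp. apply NNPP. rewrite (image_stripE A T p HT). intros Hout.
  exact (outer_point_not_vertex_free A T K p HT HK HLK Hp Hout (free_vertex_free A K HK Hf)).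
Qed.

(** * Lattice width *)

Lemma Rbar_lub_ub (E : Rbar -> Prop) x : E x -> Rbar_le x (Rbar_lub E).
Proof. intros H. unfold Rbar_lub. destruct (Rbar_ex_lub E) as [l Hl]. apply Hl, H. Qed.

Lemma lin_spread_ge K u1 u2 x y w : K x -> K y ->
  w <= Rabs ((u1 * fst x + u2 * snd x) - (u1 * fst y + u2 * snd y)) ->
  Rbar_le (Finite w) (lin_spread K u1 u2).
Proof.
  intros Hx Hy Hw. eapply Rbar_le_trans; [|apply Rbar_lub_ub; exists x, y; split; [exact Hx|split; [exact Hy|reflexivity]]].
  exact Hw.
Qed.

Lemma lin_apply_unimod T u1 u2 p : u1 * fst (apply_unimod T p) + u2 * snd (apply_unimod T p) =
  (u1 * IZR (m11 T) + u2 * IZR (m21 T)) * fst p + (u1 * IZR (m12 T) + u2 * IZR (m22 T)) * snd p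
  + (u1 * b1 T + u2 * b2 T).
Proof. unfold apply_unimod; simpl; ring. Qed.

Section Width.
Variables (A : coeffs) (T : unimod).
Hypothesis HT : is_unimod A T.
Let L := image T (strip A).

(* An integral functional [u] not vanishing identically composes with [T] to a
   nonzero integral functional, which varies by at least the width on one of the
   two edges of the strip's fundamental parallelogram. *)
Lemma strip_image_spread_ge u1 u2 : is_int u1 -> is_int u2 -> ~ (u1 = 0 /\ u2 = 0) ->
  Rbar_le (Finite (strip_width A)) (lin_spread L u1 u2).
Proof.
  intros [k1 E1] [k2 E2] Hnz. rewrite strip_width_lo. pose proof (strip_lo_le0 A).
  set (w := 1 - strip_lo A). assert (Hw : 0 < w) by (unfold w; lra).
  assert (Hc : ~ (k1 * m11 T + k2 * m21 T = 0 /\ k1 * m12 T + k2 * m22 T = 0)%Z).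
  { apply row_mul_invertible_neq0; [intros [-> ->]; apply Hnz; rewrite E1, E2; auto|].
    destruct HT as [Hd _]. lia. }
  assert (Ec1 : IZR (k1 * m11 T + k2 * m21 T) = u1 * IZR (m11 T) + u2 * IZR (m21 T))
    by (rewrite plus_IZR, !mult_IZR, E1, E2; ring).
  assert (Ec2 : IZR (k1 * m12 T + k2 * m22 T) = u1 * IZR (m12 T) + u2 * IZR (m22 T))
    by (rewrite plus_IZR, !mult_IZR, E1, E2; ring).
  destruct (Z.eq_dec (k1 * m11 T + k2 * m21 T) 0) as [Z1|Z1].
  - assert (Hc2 : IZR (k1 * m12 T + k2 * m22 T) <> 0) by (intros E; apply eq_IZR in E; tauto).
    apply (lin_spread_ge L u1 u2 (apply_unimod T (0, w)) (apply_unimod T (0, 0)) w);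
      [apply (strip_image_apply A T HT); simpl; unfold w; lra..|].
    rewrite !lin_apply_unimod, <- Ec1, <- Ec2. simpl.
    replace (_ * 0 + IZR (k1 * m12 T + k2 * m22 T) * w + (u1 * b1 T + u2 * b2 T) - _)
      with (IZR (k1 * m12 T + k2 * m22 T) * w) by ring.
    rewrite Rabs_mult, (Rabs_right w) by lra. apply IZR_neq0_Rabs_ge1 in Hc2. nra.
  - assert (Hc1 : IZR (k1 * m11 T + k2 * m21 T) <> 0) by (intros E; apply eq_IZR in E; tauto).
    apply (lin_spread_ge L u1 u2 (apply_unimod T (1, 0)) (apply_unimod T (strip_lo A, 0)) w);
      [apply (strip_image_apply A T HT); simpl; lra..|].
    rewrite !lin_apply_unimod, <- Ec1, <- Ec2. simpl.
    replace (_ * 1 + _ * 0 + (u1 * b1 T + u2 * b2 T) - _)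
      with (IZR (k1 * m11 T + k2 * m21 T) * w) by (unfold w; ring).
    rewrite Rabs_mult, (Rabs_right w) by lra. apply IZR_neq0_Rabs_ge1 in Hc1. nra.
Qed.

(* The functional [coord1 T] (minus a constant) is integral and realises the width. *)
Lemma strip_image_spread_coord1 :
  lin_spread L (detR T * IZR (m22 T)) (- (detR T * IZR (m12 T))) = Finite (strip_width A).
Proof.
  rewrite strip_width_lo. pose proof (strip_lo_le0 A). apply Rbar_is_lub_unique. split.
  - intros r [x [y [Hx [Hy ->]]]]. simpl.
    apply (image_stripE A T _ HT) in Hx. apply (image_stripE A T _ HT) in Hy.
    replace (detR T * IZR (m22 T) * fst x + - (detR T * IZR (m12 T)) * snd x -
             (detR T * IZR (m22 T) * fst y + - (detR T * IZR (m12 T)) * snd y))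
      with (coord1 T x - coord1 T y) by (unfold coord1; ring).
    apply Rabs_le. lra.
  - intros b Hb. apply Hb. exists (apply_unimod T (1, 0)), (apply_unimod T (strip_lo A, 0)).
    split; [apply (strip_image_apply A T HT); simpl; lra|]. split; [apply (strip_image_apply A T HT); simpl; lra|].
    f_equal. unfold apply_unimod; simpl.
    match goal with |- _ = Rabs ?e => replace e with
      ((1 - strip_lo A) * (detR T * (IZR (m11 T) * IZR (m22 T) - IZR (m12 T) * IZR (m21 T)))) by ring end.
    rewrite <- detR_eq, (detR_sq A T HT), Rmult_1_r, Rabs_right; lra.
Qed.

Lemma strip_image_width : lattice_width L = Finite (strip_width A).
Proof.
  apply Rbar_is_glb_unique. split.
  - intros w [u1 [u2 [Hu1 [Hu2 [Hnz ->]]]]]. apply strip_image_spread_ge; auto.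
  - intros b Hb. rewrite <- strip_image_spread_coord1. apply Hb.
    exists (detR T * IZR (m22 T)), (- (detR T * IZR (m12 T))).
    split; [exists (detZ T * m22 T)%Z; unfold detR; rewrite mult_IZR; ring|].
    split; [exists (- (detZ T * m12 T))%Z; unfold detR; rewrite opp_IZR, mult_IZR; ring|].
    split; [|reflexivity].
    pose proof (detR_sq A T HT) as Hd. intros [Z1 Z2].
    apply (detR_neq0 A T HT). rewrite detR_eq.
    assert (IZR (m22 T) = 0) by (apply Rmult_eq_reg_l with (detR T); [lra|apply (detR_neq0 A T HT)]).
    assert (IZR (m12 T) = 0) by (apply Rmult_eq_reg_l with (detR T); [lra|apply (detR_neq0 A T HT)]).
    rewrite H, H0; ring.
Qed.

End Width.

(** * A recession direction of an unbounded convex set *)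

Lemma bounded_seq_cluster (u : nat -> R) : (forall n, Rabs (u n) <= 1) ->
  exists s, forall e N, 0 < e -> exists n, (N <= n)%nat /\ Rabs (u n - s) < e.
Proof.
  intros Hb. destruct (ex_LimSup_seq u) as [l Hl].
  assert (Hb' : forall n, -1 <= u n <= 1) by (intros n; apply Rabs_le_between, Hb).
  destruct l as [s| |]; simpl in Hl.
  - exists s. intros e N He. destruct (Hl (mkposreal e He)) as [Hfreq [N' Hev]]; simpl in *.
    destruct (Hfreq (Nat.max N N')) as [n [Hn Hlt]]. exists n. split; [lia|].
    specialize (Hev n ltac:(lia)). apply Rabs_def1; lra.
  - destruct (Hl 1 O) as [n [_ Hn]]. specialize (Hb' n). lra.
  - destruct (Hl (-1)) as [N HN]. specialize (HN N (le_n N)). specialize (Hb' N). lra.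
Qed.

Definition far_in_cone (C : pset) (g : pt) : Prop :=
  forall R0, exists p, C p /\ fst p - fst g >= R0 /\ Rabs (snd p - snd g) <= fst p - fst g.

Lemma far_in_cone_slope C g : far_in_cone C g -> exists s, forall e R0, 0 < e ->
  exists p, C p /\ fst p - fst g >= R0 /\ Rabs ((snd p - snd g) / (fst p - fst g) - s) < e.
Proof.
  intros HF. destruct (choice (fun (n : nat) p => C p /\ fst p - fst g >= INR n /\
    Rabs (snd p - snd g) <= fst p - fst g) (fun n => HF (INR n))) as [p Hp].
  set (u n := (snd (p n) - snd g) / (fst (p n) - fst g)).
  destruct (bounded_seq_cluster u) as [s Hs].
  { intros n. destruct (Hp n) as [_ [_ Hc]]. unfold u.
    destruct (Req_dec (fst (p n) - fst g) 0) as [E|E].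
    - rewrite E. unfold Rdiv. rewrite Rinv_0, Rmult_0_r, Rabs_R0. lra.
    - unfold Rdiv. rewrite Rabs_mult, Rabs_inv, (Rabs_right (fst (p n) - fst g))
        by (pose proof (Rabs_pos (snd (p n) - snd g)); lra).
      apply Rmult_le_reg_r with (fst (p n) - fst g);
        [pose proof (Rabs_pos (snd (p n) - snd g)); lra|].
      rewrite Rmult_assoc, Rinv_l, Rmult_1_r, Rmult_1_l; auto. }
  exists s. intros e R0 He.
  destruct (INR_archimed 1 R0 ltac:(lra)) as [N HN]. rewrite Rmult_1_r in HN.
  destruct (Hs e N He) as [n [Hn Hu]]. destruct (Hp n) as [HC [Hfar _]].
  exists (p n). split; [exact HC|]. split; [|exact Hu].
  apply le_INR in Hn. lra.
Qed.

Lemma closed_convex_ray C g s : closed_set C -> convex C -> C g ->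
  (forall e R0, 0 < e -> exists p, C p /\ fst p - fst g >= R0 /\
     Rabs ((snd p - snd g) / (fst p - fst g) - s) < e) ->
  forall t, 0 <= t -> C (fst g + t, snd g + t * s).
Proof.
  intros Hc Hv Hg Ha t Ht. apply NNPP; intro Hn.
  destruct (Hc _ Hn) as [e [He Hb]].
  destruct (Ha (e/(t+1)) (t+1)) as [p [Hp [H1 H2]]]; [apply Rdiv_lt_0_compat; lra|].
  set (sg := (snd p - snd g) / (fst p - fst g)) in *.
  apply (Hb (fst g + t, snd g + t * sg)).
  - apply coord_lt_dist2. simpl. replace (fst g + t - (fst g + t)) with 0 by ring. rewrite Rabs_R0.
    replace (snd g + t * sg - (snd g + t * s)) with (t * (sg - s)) by ring.
    rewrite Rabs_mult, (Rabs_right t), Rplus_0_l by lra.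
    apply Rle_lt_trans with (t * (e / (t+1))); [apply Rmult_le_compat_l; lra|].
    assert (t * (e/(t+1)) = e - e/(t+1)) by (field; lra).
    assert (0 < e/(t+1)) by (apply Rdiv_lt_0_compat; lra). lra.
  - apply (convex_point C g p _ (t / (fst p - fst g)) Hv Hg Hp).
    + split; [apply Rdiv_le_0_compat; lra|].
      apply Rmult_le_reg_r with (fst p - fst g); [lra|].
      unfold Rdiv; rewrite Rmult_assoc, Rinv_l; lra.
    + unfold sg; f_equal; field; lra.
Qed.

(* Points far out on the ray from [g] pull nearby points of a ray from [c]
   into [C]; closedness finishes the job. *)
Lemma closed_convex_recession C g s : closed_set C -> convex C ->
  (forall t, 0 <= t -> C (fst g + t, snd g + t * s)) ->
  forall c t, C c -> 0 <= t -> C (fst c + t, snd c + t * s).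
Proof.
  intros Hc Hv Hr c t Hcc Ht. apply NNPP; intro Hn. destruct (Hc _ Hn) as [e [He Hb]].
  set (N := Rabs (fst g - fst c) + Rabs (snd g - snd c) + 1).
  assert (HN : 1 <= N) by (unfold N; pose proof (Rabs_pos (fst g - fst c)); pose proof (Rabs_pos (snd g - snd c)); lra).
  set (lam := Rmin (1/2) (e / (2*N))).
  assert (Hl0 : 0 < lam) by (unfold lam; apply Rmin_pos; [lra | apply Rdiv_lt_0_compat; lra]).
  assert (Hl1 : lam <= 1/2) by apply Rmin_l.
  assert (Hl2 : lam <= e/(2*N)) by apply Rmin_r.
  apply (Hb ((1-lam) * fst c + lam * (fst g + t/lam), (1-lam) * snd c + lam * (snd g + t/lam * s))).
  - apply coord_lt_dist2. simpl.
    replace ((1 - lam) * fst c + lam * (fst g + t / lam) - (fst c + t)) with (lam * (fst g - fst c)) by (field; lra).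
    replace ((1 - lam) * snd c + lam * (snd g + t / lam * s) - (snd c + t * s)) with (lam * (snd g - snd c)) by (field; lra).
    rewrite !Rabs_mult, (Rabs_right lam) by lra.
    assert (lam * (Rabs (fst g - fst c) + Rabs (snd g - snd c)) <= lam * (N - 1))
      by (apply Rmult_le_compat_l; unfold N; lra).
    assert (lam * N <= e / 2).
    { apply Rle_trans with (e/(2*N) * N); [apply Rmult_le_compat_r; lra|right; field; lra]. }
    nra.
  - apply (convex_point C c (fst g + t/lam, snd g + t/lam * s) _ lam Hv Hcc);
      [apply Hr, Rdiv_le_0_compat; lra|lra|reflexivity].
Qed.

Lemma square_in_recession C s x rho t :
  (forall c t, C c -> 0 <= t -> C (fst c + t, snd c + t * s)) ->
  square_in C x rho -> 0 <= t -> square_in C (fst x + t, snd x + t * s) rho.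
Proof.
  intros Hr [Hp HC] Ht. split; auto. intros y [H1 H2]. simpl in *.
  replace y with (fst (fst y - t, snd y - t * s) + t, snd (fst y - t, snd y - t * s) + t * s)
    by (destruct y; simpl; f_equal; ring).
  apply Hr; auto. apply HC. unfold in_square; simpl.
  replace (fst y - t - fst x) with (fst y - (fst x + t)) by ring.
  replace (snd y - t * s - snd x) with (snd y - (snd x + t * s)) by ring. auto.
Qed.

(** * Rational recession direction *)

Lemma exists_glb (f : pt -> R) (C : pset) c0 lb : C c0 -> (forall c, C c -> lb <= f c) ->
  exists al, (forall c, C c -> al <= f c) /\ (forall x, al < x -> exists c, C c /\ f c < x).
Proof.
  intros H0 Hlb. set (E := fun y => exists c, C c /\ y = - f c).
  destruct (completeness E) as [m [Hmu Hml]].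
  { exists (-lb). intros y [c [Hc ->]]. pose proof (Hlb c Hc). lra. }
  { exists (- f c0), c0. auto. }
  exists (-m). split.
  - intros c Hc. assert (- f c <= m) by (apply Hmu; exists c; auto). lra.
  - intros x Hx. apply NNPP; intro Hn. assert (m <= -x); [|lra].
    apply Hml. intros y [c [Hc ->]].
    destruct (Rlt_dec (f c) x); [exfalso; apply Hn; exists c; auto|lra].
Qed.

Lemma no_straddle_range A (f : pt -> R) (C : pset) c0 : C c0 ->
  (forall c1 c2 k, in_A A k -> C c1 -> C c2 -> f c1 < k -> k + 1 < f c2 -> False) ->
  exists k, in_A A k /\ forall c, C c -> strip_lo A <= f c - k <= 1.
Proof.
  intros H0 Hno. destruct A.
  - assert (Hlb : forall c, C c -> f c0 - 2 <= f c).
    { intros c Hc. apply NNPP; intro Hn. pose proof (archimed (f c)).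
      apply (Hno c c0 (IZR (up (f c)))); [exists (up (f c)); reflexivity|auto|auto|lra|lra]. }
    destruct (exists_glb f C c0 _ H0 Hlb) as [al [Hal1 Hal2]].
    pose proof (archimed al) as [Hk1 Hk2].
    exists (IZR (up al)). split; [exists (up al); reflexivity|]. intros c Hc. simpl.
    pose proof (Hal1 c Hc). split; [lra|]. apply NNPP; intro Hn.
    destruct (Hal2 (IZR (up al))) as [c1 [Hc1 Hlt]]; [lra|].
    apply (Hno c1 c (IZR (up al))); [exists (up al); reflexivity|auto|auto|lra|lra].
  - assert (Hlb : forall c, C c -> f c0 - 1 <= f c).
    { intros c Hc. apply NNPP; intro Hn.
      apply (Hno c c0 ((f c + f c0 - 1)/2)); [exact I|auto|auto|lra|lra]. }
    destruct (exists_glb f C c0 _ H0 Hlb) as [al [Hal1 Hal2]].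
    exists al. split; [exact I|]. intros c Hc. simpl.
    pose proof (Hal1 c Hc). split; [lra|]. apply NNPP; intro Hn.
    destruct (Hal2 (f c - 1)) as [c1 [Hc1 Hlt]]; [lra|].
    apply (Hno c1 c ((f c1 + f c - 1)/2)); [exact I|auto|auto|lra|lra].
Qed.

Lemma convex_comb_lt a k G : a < k -> exists mu, 0 < mu <= 1 /\ mu * G + (1-mu) * a < k.
Proof.
  intros H. set (D := Rabs (G - a) + (k - a)).
  pose proof (Rle_abs (G - a)). pose proof (Rabs_pos (G - a)).
  assert (HD : 0 < D) by (unfold D; lra).
  exists ((k-a)/(2*D)).
  assert (E : (k-a)/(2*D) * D = (k-a)/2) by (field; lra).
  assert (Hm0 : 0 < (k-a)/(2*D)) by (apply Rdiv_lt_0_compat; lra).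
  assert ((k-a)/(2*D) * (G - a) <= (k-a)/(2*D) * D) by (apply Rmult_le_compat_l; [lra|unfold D; lra]).
  split; [split; [auto|]|].
  - apply Rmult_le_reg_r with D; [lra|]. rewrite E. unfold D; lra.
  - replace ((k - a) / (2 * D) * G + (1 - (k - a) / (2 * D)) * a) with (a + (k-a)/(2*D) * (G - a)) by ring.
    lra.
Qed.

Definition lattice_functional (p q : Z) (x : pt) : R := IZR p * fst x - IZR q * snd x.

Lemma lattice_functional_comb p q x y t :
  lattice_functional p q ((1-t) * fst x + t * fst y, (1-t) * snd x + t * snd y) =
  (1-t) * lattice_functional p q x + t * lattice_functional p q y.
Proof. unfold lattice_functional; simpl; ring. Qed.

Lemma lattice_functional_kernel p q x : (0 < q)%Z -> lattice_functional p q x = 0 ->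
  exists tau, x = (tau * IZR q, tau * IZR p).
Proof.
  unfold lattice_functional. intros Hq H. apply IZR_lt in Hq.
  exists (fst x / IZR q). destruct x as [x1 x2]; simpl in *. f_equal; [field; lra|].
  replace (x1 / IZR q * IZR p) with (IZR p * x1 / IZR q) by (field; lra).
  replace (IZR p * x1) with (IZR q * x2) by lra. field. lra.
Qed.

(* The unimodular map with columns [(a, b)] and [(q, p)], where [a p - b q = 1],
   translated by [k (a, b) + n (q, p)]; it maps the line [u1 = 0] onto the level
   [lattice_functional p q = k]. *)
Definition level_unimod (p q a b : Z) (k : R) (n : Z) : unimod :=
  {| m11 := a; m12 := q; m21 := b; m22 := p;
     b1 := k * IZR a + IZR n * IZR q; b2 := k * IZR b + IZR n * IZR p |}.

Lemma level_unimod_unimod A p q a b k n : (a * p - b * q = 1)%Z -> in_A A k ->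
  is_unimod A (level_unimod p q a b k n).
Proof.
  intros Hbez Hk. split; [left; simpl; lia|].
  destruct A; simpl; auto. destruct Hk as [kz ->]. split.
  - exists (kz * a + n * q)%Z. rewrite plus_IZR, !mult_IZR; ring.
  - exists (kz * b + n * p)%Z. rewrite plus_IZR, !mult_IZR; ring.
Qed.

Lemma coord1_level_unimod p q a b k x : (a * p - b * q = 1)%Z ->
  coord1 (level_unimod p q a b k 0) x = lattice_functional p q x - k.
Proof.
  intros Hbez. unfold coord1, detR, detZ, level_unimod, lattice_functional; simpl.
  replace (a * p - q * b)%Z with 1%Z by lia.
  assert (H : IZR a * IZR p - IZR b * IZR q = 1) by (rewrite <- !mult_IZR, <- minus_IZR, Hbez; reflexivity).
  transitivity (IZR p * fst x - IZR q * snd x - k * (IZR a * IZR p - IZR b * IZR q)); [ring|].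
  rewrite H; ring.
Qed.

Lemma square_in_level K p q w1 w2 r1 r2 th : convex K ->
  square_in K w1 r1 -> square_in K w2 r2 ->
  lattice_functional p q w1 < th < lattice_functional p q w2 ->
  exists y, square_in K y (Rmin r1 r2) /\ lattice_functional p q y = th.
Proof.
  intros HK S1 S2 Ht. set (f := lattice_functional p q) in *.
  set (t := (th - f w1) / (f w2 - f w1)).
  assert (H01 : 0 <= t <= 1).
  { unfold t. split; [apply Rdiv_le_0_compat; lra|].
    apply Rmult_le_reg_r with (f w2 - f w1); [lra|]. unfold Rdiv; rewrite Rmult_assoc, Rinv_l; lra. }
  exists ((1-t)*fst w1 + t*fst w2, (1-t)*snd w1 + t*snd w2). split.
  - apply square_in_comb2; auto.
  - unfold f. rewrite lattice_functional_comb. fold f. unfold t. field. lra.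
Qed.

Section RationalSlope.
Variables (C : pset) (g : pt) (r : R) (p q a b : Z).
Hypotheses (HC : convex C) (Hg : square_in C g r).
Hypotheses (Hq : (0 < q)%Z) (Hbez : (a * p - b * q = 1)%Z).
Hypothesis Hrec : forall c t, C c -> 0 <= t -> C (fst c + t, snd c + t * (IZR p / IZR q)).
Let f := lattice_functional p q.

Lemma square_in_along_lattice_dir x rho tau : square_in C x rho -> 0 <= tau ->
  square_in C (fst x + tau * IZR q, snd x + tau * IZR p) rho.
Proof.
  intros Hx Ht. assert (0 < IZR q) by (apply IZR_lt; auto).
  replace (snd x + tau * IZR p) with (snd x + tau * IZR q * (IZR p / IZR q)) by (field; lra).
  apply square_in_recession; auto. nra.
Qed.

Lemma level_square_vertices y k rho : square_in C y rho -> f y = k ->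
  exists n0, forall n, IZR n0 <= IZR n ->
    square_in C (apply_unimod (level_unimod p q a b k n) (0,0)) rho /\
    square_in C (apply_unimod (level_unimod p q a b k n) (0,1)) rho.
Proof.
  intros Hy Hf.
  assert (Hb : IZR a * IZR p - IZR b * IZR q = 1) by (rewrite <- !mult_IZR, <- minus_IZR, Hbez; reflexivity).
  destruct (lattice_functional_kernel p q (k * IZR a - fst y, k * IZR b - snd y) Hq) as [tau Htau].
  { unfold f, lattice_functional in *; simpl.
    replace (IZR p * (k * IZR a - fst y) - IZR q * (k * IZR b - snd y))
      with (k * (IZR a * IZR p - IZR b * IZR q) - (IZR p * fst y - IZR q * snd y)) by ring.
    rewrite Hb, Hf. ring. }
  injection Htau as E1 E2.
  exists (up (Rabs tau)). intros n Hn. pose proof (archimed (Rabs tau)) as [Hup _].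
  pose proof (Rle_abs (- tau)). rewrite Rabs_Ropp in H.
  split.
  - replace (apply_unimod (level_unimod p q a b k n) (0,0))
      with (fst y + (tau + IZR n) * IZR q, snd y + (tau + IZR n) * IZR p).
    + apply square_in_along_lattice_dir; auto. lra.
    + unfold apply_unimod, level_unimod; simpl. f_equal; nra.
  - replace (apply_unimod (level_unimod p q a b k n) (0,1))
      with (fst y + (tau + IZR n + 1) * IZR q, snd y + (tau + IZR n + 1) * IZR p).
    + apply square_in_along_lattice_dir; auto. lra.
    + unfold apply_unimod, level_unimod; simpl. f_equal; nra.
Qed.

Lemma straddle_not_vertex_free A c1 c2 k : in_A A k -> C c1 -> C c2 ->
  f c1 < k -> k + 1 < f c2 -> ~ vertex_free A C.
Proof.
  intros Hk Hc1 Hc2 Hk1 Hk2 Hf.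
  destruct (convex_comb_lt (f c1) k (f g) Hk1) as [mu1 [Hm1 Hmu1]].
  destruct (convex_comb_lt (- f c2) (-(k+1)) (- f g)) as [mu2 [Hm2 Hmu2]]; [lra|].
  pose proof (square_in_toward C g c1 r mu1 HC Hg Hc1 Hm1) as S1.
  pose proof (square_in_toward C g c2 r mu2 HC Hg Hc2 Hm2) as S2.
  set (w1 := (mu1 * fst g + (1 - mu1) * fst c1, mu1 * snd g + (1 - mu1) * snd c1)) in S1.
  set (w2 := (mu2 * fst g + (1 - mu2) * fst c2, mu2 * snd g + (1 - mu2) * snd c2)) in S2.
  assert (E1 : f w1 = mu1 * f g + (1 - mu1) * f c1) by (unfold f, lattice_functional, w1; simpl; ring).
  assert (E2 : f w2 = mu2 * f g + (1 - mu2) * f c2) by (unfold f, lattice_functional, w2; simpl; ring).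
  destruct (square_in_level C p q w1 w2 _ _ k HC S1 S2) as [y [Sy Ey]]; [fold f; lra|].
  destruct (square_in_level C p q w1 w2 _ _ (k+1) HC S1 S2) as [y' [Sy' Ey']]; [fold f; lra|].
  destruct (level_square_vertices y k _ Sy Ey) as [n0 Hn0].
  destruct (level_square_vertices y' (k+1) _ Sy' Ey') as [n1 Hn1].
  set (n := Z.max n0 n1).
  destruct (Hn0 n) as [V0 V2]; [apply IZR_le, Z.le_max_l|].
  destruct (Hn1 n) as [V1 _]; [apply IZR_le, Z.le_max_r|].
  apply Hf. exists (level_unimod p q a b k n), (Rmin (mu1 * r) (mu2 * r)).
  split; [apply level_unimod_unimod; auto|]. split; [exact V0|]. split; [|exact V2].
  replace (apply_unimod (level_unimod p q a b k n) (1,0))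
    with (apply_unimod (level_unimod p q a b (k+1) n) (0,0)); [exact V1|].
  unfold apply_unimod, level_unimod; simpl. f_equal; ring.
Qed.

Lemma rational_slope_in_strip A : vertex_free A C ->
  exists T, is_unimod A T /\ set_sub C (image T (strip A)).
Proof.
  intros Hf.
  destruct (no_straddle_range A f C g (square_in_center _ _ _ Hg)) as [k [Hk Hrange]].
  { intros c1 c2 k Hk Hc1 Hc2 H1 H2. exact (straddle_not_vertex_free A c1 c2 k Hk Hc1 Hc2 H1 H2 Hf). }
  exists (level_unimod p q a b k 0). assert (HT := level_unimod_unimod A p q a b k 0 Hbez Hk).
  split; [exact HT|]. intros c Hc.
  apply (image_stripE A _ c HT). rewrite coord1_level_unimod by exact Hbez. apply Hrange, Hc.
Qed.

End RationalSlope.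

(** * Lattice triangles *)

Definition floorZ (x : R) : Z := (up x - 1)%Z.
Definition frac_part (x : R) : R := x - IZR (floorZ x).

Lemma frac_part_bounds x : 0 <= frac_part x < 1.
Proof. unfold frac_part, floorZ. pose proof (archimed x). rewrite minus_IZR. simpl. lra. Qed.

(* Reducing the coordinates of [e = sg v + ta w] modulo 1, and reflecting through the
   centre of the parallelogram when they sum to more than 1, gives a lattice point
   in the half-open triangle [0, v, w] other than its vertices. *)
Lemma lattice_point_in_triangle (v1 v2 w1 w2 e1 e2 : Z) (sg ta : R) :
  IZR e1 = sg * IZR v1 + ta * IZR w1 -> IZR e2 = sg * IZR v2 + ta * IZR w2 ->
  (frac_part sg <> 0 \/ frac_part ta <> 0) ->
  exists (n1 n2 : Z) (a b : R), IZR n1 = a * IZR v1 + b * IZR w1 /\ IZR n2 = a * IZR v2 + b * IZR w2 /\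
    0 <= a /\ 0 <= b /\ a + b <= 1 /\ ((0 < b < 1) \/ (b = 0 /\ 0 < a < 1)).
Proof.
  intros E1 E2 Hfr. pose proof (frac_part_bounds sg). pose proof (frac_part_bounds ta).
  set (m1 := (e1 - floorZ sg * v1 - floorZ ta * w1)%Z).
  set (m2 := (e2 - floorZ sg * v2 - floorZ ta * w2)%Z).
  assert (M1 : IZR m1 = frac_part sg * IZR v1 + frac_part ta * IZR w1).
  { unfold m1, frac_part. rewrite !minus_IZR, !mult_IZR, E1. ring. }
  assert (M2 : IZR m2 = frac_part sg * IZR v2 + frac_part ta * IZR w2).
  { unfold m2, frac_part. rewrite !minus_IZR, !mult_IZR, E2. ring. }
  destruct (Rle_dec (frac_part sg + frac_part ta) 1).
  - exists m1, m2, (frac_part sg), (frac_part ta). do 5 (split; [lra|]).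
    destruct (Req_dec (frac_part ta) 0) as [Z0|Z0]; [right|left]; [destruct Hfr|]; lra.
  - exists (v1 + w1 - m1)%Z, (v2 + w2 - m2)%Z, (1 - frac_part sg), (1 - frac_part ta).
    rewrite !minus_IZR, !plus_IZR, M1, M2. repeat split; try ring; lra.
Qed.

(* A lattice triangle of determinant other than 0 and +-1 contains a lattice point
   cutting off a lattice triangle of smaller nonzero determinant. *)
Lemma lattice_triangle_split (v1 v2 w1 w2 : Z) :
  Z.abs (v1 * w2 - v2 * w1) <> 1%Z -> (v1 * w2 - v2 * w1 <> 0)%Z ->
  exists (n1 n2 : Z) (a b : R), IZR n1 = a * IZR v1 + b * IZR w1 /\ IZR n2 = a * IZR v2 + b * IZR w2 /\
    0 <= a /\ 0 <= b /\ a + b <= 1 /\ ((0 < b < 1) \/ (b = 0 /\ 0 < a < 1)).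
Proof.
  intros H1 H0. set (D := (v1 * w2 - v2 * w1)%Z) in *.
  assert (HD : IZR D <> 0) by (intros E; apply eq_IZR in E; lia).
  assert (ED : IZR D = IZR v1 * IZR w2 - IZR v2 * IZR w1) by (unfold D; rewrite minus_IZR, !mult_IZR; ring).
  set (s1 := IZR w2 / IZR D). set (t1 := - IZR v2 / IZR D).
  set (s2 := - IZR w1 / IZR D). set (t2 := IZR v1 / IZR D).
  assert (Hfr : (frac_part s1 <> 0 \/ frac_part t1 <> 0) \/ (frac_part s2 <> 0 \/ frac_part t2 <> 0)).
  { apply NNPP; intro Hn. apply H1.
    assert (Hint : forall x, frac_part x = 0 -> x = IZR (floorZ x)) by (unfold frac_part; intros; lra).
    assert (Hid : IZR D * (s1 * t2 - t1 * s2) = 1) by (unfold s1, t1, s2, t2; rewrite ED in *; field; auto).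
    rewrite (Hint s1), (Hint t1), (Hint s2), (Hint t2) in Hid by tauto.
    rewrite <- !mult_IZR, <- minus_IZR, <- mult_IZR in Hid. apply eq_IZR, Z.mul_eq_1 in Hid. lia. }
  destruct Hfr as [Hf|Hf].
  - apply (lattice_point_in_triangle v1 v2 w1 w2 1 0 s1 t1); auto; unfold s1, t1; rewrite ED in *; field; auto.
  - apply (lattice_point_in_triangle v1 v2 w1 w2 0 1 s2 t2); auto; unfold s2, t2; rewrite ED in *; field; auto.
Qed.

Lemma convex_lattice_triangle_unimodular (Q : pset) : convex Q -> forall N (x0 y0 v1 v2 w1 w2 : Z),
  (Z.abs (v1 * w2 - v2 * w1) <= Z.of_nat N)%Z -> (v1 * w2 - v2 * w1 <> 0)%Z ->
  Q (IZR x0, IZR y0) -> Q (IZR (x0 + v1), IZR (y0 + v2)) -> Q (IZR (x0 + w1), IZR (y0 + w2)) ->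
  exists T, is_unimod AZ T /\
    Q (apply_unimod T (0,0)) /\ Q (apply_unimod T (1,0)) /\ Q (apply_unimod T (0,1)).
Proof.
  intros HQ N. induction N as [|N IH]; intros x0 y0 v1 v2 w1 w2 HN HD Q0 Qv Qw; [lia|].
  destruct (Z.eq_dec (Z.abs (v1 * w2 - v2 * w1)) 1) as [E1|E1].
  - exists {| m11 := v1; m12 := w1; m21 := v2; m22 := w2; b1 := IZR x0; b2 := IZR y0 |}.
    split; [split; [simpl; lia|split; [exists x0|exists y0]; reflexivity]|].
    unfold apply_unimod; simpl. rewrite !plus_IZR in Qv, Qw.
    split; [|split];
      match goal with |- Q ?z => match goal with H : Q ?w |- _ => replace z with w; [exact H|f_equal; ring] end end.
  - destruct (lattice_triangle_split v1 v2 w1 w2 E1 HD) as [n1 [n2 [a [b [En1 [En2 [Ha [Hb [Hab Hcase]]]]]]]]].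
    set (D := (v1 * w2 - v2 * w1)%Z) in *.
    assert (ED : IZR D = IZR v1 * IZR w2 - IZR v2 * IZR w1) by (unfold D; rewrite minus_IZR, !mult_IZR; ring).
    assert (Qn : Q (IZR (x0 + n1), IZR (y0 + n2))).
    { rewrite !plus_IZR in *. rewrite En1, En2.
      replace (IZR x0 + (a * IZR v1 + b * IZR w1), IZR y0 + (a * IZR v2 + b * IZR w2)) with
        ((1 - a - b) * fst (IZR x0, IZR y0) + a * fst (IZR x0 + IZR v1, IZR y0 + IZR v2)
           + b * fst (IZR x0 + IZR w1, IZR y0 + IZR w2),
         (1 - a - b) * snd (IZR x0, IZR y0) + a * snd (IZR x0 + IZR v1, IZR y0 + IZR v2)
           + b * snd (IZR x0 + IZR w1, IZR y0 + IZR w2)) by (simpl; f_equal; ring).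
      apply convex_comb3; auto; lra. }
    assert (Hsmaller : forall (D' : Z) (c : R), IZR D' = c * IZR D -> 0 < c < 1 ->
      (Z.abs D' <= Z.of_nat N)%Z /\ D' <> 0%Z).
    { intros D' c ED' Hc. assert (HDr : IZR D <> 0) by (intros E; apply eq_IZR in E; lia).
      split.
      - assert (Rabs (IZR D') < Rabs (IZR D)).
        { rewrite ED', Rabs_mult, (Rabs_right c) by lra. pose proof (Rabs_pos_lt _ HDr). nra. }
        rewrite <- !abs_IZR in H. apply lt_IZR in H. lia.
      - intros E. rewrite E in ED'. simpl in ED'. nra. }
    destruct Hcase as [Hb01 | [Hb0 Ha01]].
    + destruct (Hsmaller (v1 * n2 - v2 * n1)%Z b) as [HN' HD']; auto.
      { rewrite minus_IZR, !mult_IZR, En1, En2, ED. ring. }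
      apply (IH x0 y0 v1 v2 n1 n2); auto.
    + destruct (Hsmaller (n1 * w2 - n2 * w1)%Z a) as [HN' HD']; auto.
      { rewrite minus_IZR, !mult_IZR, En1, En2, ED, Hb0. ring. }
      apply (IH x0 y0 n1 n2 w1 w2); auto.
Qed.

(** * Irrational recession direction *)

Definition int_comb (s x : R) : Prop := exists q p : Z, x = IZR q * s - IZR p.

Lemma int_comb_sub s x y : int_comb s x -> int_comb s y -> int_comb s (x - y).
Proof. intros [q [p ->]] [q' [p' ->]]. exists (q - q')%Z, (p - p')%Z. rewrite !minus_IZR. ring. Qed.

Lemma int_comb_mul s x (k : Z) : int_comb s x -> int_comb s (IZR k * x).
Proof. intros [q [p ->]]. exists (k * q)%Z, (k * p)%Z. rewrite !mult_IZR. ring. Qed.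

Lemma int_comb_least_generates s al : int_comb s al -> 0 < al ->
  (forall x, int_comb s x -> 0 < x -> al <= x) ->
  forall z, int_comb s z -> exists k : Z, z = IZR k * al.
Proof.
  intros Hal Hal0 Hal_lb z Hz. exists (floorZ (z / al)).
  pose proof (frac_part_bounds (z / al)) as Hf. unfold frac_part in Hf.
  set (k := floorZ (z / al)) in *.
  destruct (Req_dec (z - IZR k * al) 0) as [E0|E0]; [lra|exfalso].
  assert (Hr : z - IZR k * al = (z / al - IZR k) * al) by (field; lra).
  assert (z / al - IZR k <> 0) by (intros E1; apply E0; rewrite Hr, E1; ring).
  assert (Hpos : 0 < z - IZR k * al) by (rewrite Hr; apply Rmult_lt_0_compat; lra).
  pose proof (Hal_lb _ (int_comb_sub s _ _ Hz (int_comb_mul s al k Hal)) Hpos).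
  assert ((z / al - IZR k) * al < 1 * al) by (apply Rmult_lt_compat_r; lra). lra.
Qed.

Definition irrational (s : R) : Prop := ~ exists p q : Z, (0 < q)%Z /\ s = IZR p / IZR q.

(* Otherwise the positive elements of [Z s + Z] have a positive infimum, which then
   belongs to the group and generates it, making [s] rational. *)
Lemma irrational_small_comb s : irrational s -> forall e, 0 < e ->
  exists q p : Z, 0 < IZR q * s - IZR p < e.
Proof.
  intros Hirr e He. apply NNPP; intro Hn.
  assert (Hlb : forall x, int_comb s x -> 0 < x -> e <= x).
  { intros x [q [p ->]] Hx. apply NNPP; intro. apply Hn. exists q, p. lra. }
  set (E := fun y => exists x, int_comb s x /\ 0 < x /\ y = -x).
  destruct (completeness E) as [m [Hmu Hml]].
  { exists (-e). intros y [x [Hx [Hx0 ->]]]. pose proof (Hlb x Hx Hx0). lra. }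
  { exists (-1), 1. split; [exists 0%Z, (-1)%Z; simpl; ring|lra]. }
  set (al := -m).
  assert (Hal_lb : forall x, int_comb s x -> 0 < x -> al <= x).
  { intros x Hx Hx0. assert (-x <= m) by (apply Hmu; exists x; auto). unfold al; lra. }
  assert (Hal_e : e <= al).
  { assert (m <= -e); [|unfold al; lra]. apply Hml. intros y [x [Hx [Hx0 ->]]].
    pose proof (Hlb x Hx Hx0). lra. }
  assert (Hal_ap : forall z, al < z -> exists x, int_comb s x /\ 0 < x /\ x < z).
  { intros z Hz. apply NNPP; intro Hnn. assert (m <= -z); [|unfold al in Hz; lra].
    apply Hml. intros y [x [Hx [Hx0 ->]]].
    destruct (Rlt_dec x z); [exfalso; apply Hnn; exists x; auto|lra]. }
  assert (Hal : int_comb s al).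
  { destruct (Hal_ap (al + al)) as [x [Hx [Hx0 Hx1]]]; [lra|].
    destruct (Req_dec x al) as [<-|Hne]; auto.
    pose proof (Hal_lb x Hx Hx0).
    destruct (Hal_ap x) as [y [Hy [Hy0 Hy1]]]; [lra|].
    pose proof (Hal_lb y Hy Hy0).
    pose proof (Hal_lb (x - y) (int_comb_sub s x y Hx Hy) ltac:(lra)). lra. }
  pose proof (int_comb_least_generates s al Hal ltac:(lra) Hal_lb) as Hmult.
  destruct (Hmult 1) as [m1 Hm1]; [exists 0%Z, (-1)%Z; simpl; ring|].
  destruct (Hmult s) as [m2 Hm2]; [exists 1%Z, 0%Z; simpl; ring|].
  assert (Hm1p : 0 < IZR m1) by (destruct (Rle_dec (IZR m1) 0); [nra|lra]).
  apply Hirr. exists m2, m1. split; [apply lt_IZR; auto|].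
  assert (Hinv : al = / IZR m1) by (apply Rmult_eq_reg_l with (IZR m1); [rewrite Rinv_r|]; lra).
  rewrite Hm2, Hinv. reflexivity.
Qed.

Lemma irrational_dense s : irrational s -> forall c r T0, 0 < r -> exists X Y : Z,
  T0 <= IZR X /\ Rabs (IZR Y - IZR X * s - c) < r.
Proof.
  intros Hirr c r T0 Hr. destruct (irrational_small_comb s Hirr r Hr) as [q [p [Hx0 Hx1]]].
  set (x := IZR q * s - IZR p) in *.
  pose proof (archimed (T0 + Rabs (IZR q) * (1/x + 1))) as [A1 _].
  set (X0 := up (T0 + Rabs (IZR q) * (1/x + 1))) in *.
  pose proof (archimed (IZR X0 * s + c)) as [B1 B2].
  set (base := IZR (up (IZR X0 * s + c)) - IZR X0 * s - c).
  assert (Hb : 0 < base <= 1) by (unfold base; lra).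
  set (k := floorZ (base / x)). pose proof (frac_part_bounds (base / x)) as Hk. unfold frac_part in Hk. fold k in Hk.
  assert (Hbx : 0 < base / x) by (apply Rdiv_lt_0_compat; lra).
  assert (Hk0 : 0 <= IZR k).
  { assert (Hk' : (-1 < k)%Z) by (apply lt_IZR; simpl; lra). apply IZR_le. lia. }
  assert (Hkx : 0 <= base - IZR k * x < x).
  { replace (base - IZR k * x) with ((base / x - IZR k) * x) by (field; lra). split; nra. }
  assert (Hk1 : IZR k <= 1 / x).
  { apply Rle_trans with (base / x); [lra|]. unfold Rdiv.
    apply Rmult_le_compat_r; [apply Rlt_le, Rinv_0_lt_compat|]; lra. }
  exists (X0 + k * q)%Z, (up (IZR X0 * s + c) + k * p)%Z. rewrite !plus_IZR, !mult_IZR. split.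
  - pose proof (Rle_abs (- IZR q)). rewrite Rabs_Ropp in H. pose proof (Rabs_pos (IZR q)).
    assert (IZR k * Rabs (IZR q) <= 1 / x * Rabs (IZR q)) by (apply Rmult_le_compat_r; lra).
    nra.
  - replace (IZR (up (IZR X0 * s + c)) + IZR k * IZR p - (IZR X0 + IZR k * IZR q) * s - c)
      with (base - IZR k * x) by (unfold base, x; ring).
    rewrite Rabs_right; lra.
Qed.

(* Two good approximations [X1] and [X1 + q] span a direction of slope close to [s];
   a third one taken far enough away cannot lie on that line. *)
Lemma irrational_three_points s : irrational s -> forall c r T0, 0 < r ->
  exists X1 Y1 X2 Y2 X3 Y3 : Z,
  T0 <= IZR X1 /\ T0 <= IZR X2 /\ T0 <= IZR X3 /\
  Rabs (IZR Y1 - IZR X1 * s - c) < r /\ Rabs (IZR Y2 - IZR X2 * s - c) < r /\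
  Rabs (IZR Y3 - IZR X3 * s - c) < r /\
  ((X2 - X1) * (Y3 - Y1) - (Y2 - Y1) * (X3 - X1) <> 0)%Z.
Proof.
  intros Hirr c r T0 Hr. destruct (irrational_small_comb s Hirr (r/3)) as [q [p [Hx0 Hx1]]]; [lra|].
  set (x := IZR q * s - IZR p) in *.
  pose proof (Rle_abs (- IZR q)). rewrite Rabs_Ropp in H. pose proof (Rabs_pos (IZR q)).
  destruct (irrational_dense s Hirr c (r/3) (T0 + Rabs (IZR q))) as [X1 [Y1 [HX1 HE1]]]; [lra|].
  set (far := IZR X1 + Rabs (IZR q) * r / x + 1).
  destruct (irrational_dense s Hirr c (r/3) (Rmax T0 far)) as [X3 [Y3 [HX3 HE3]]]; [lra|].
  pose proof (Rmax_l T0 far). pose proof (Rmax_r T0 far).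
  exists X1, Y1, (X1 + q)%Z, (Y1 + p)%Z, X3, Y3.
  rewrite !plus_IZR. do 3 (split; [lra|]). split; [lra|].
  split.
  { replace (IZR Y1 + IZR p - (IZR X1 + IZR q) * s - c) with ((IZR Y1 - IZR X1 * s - c) - x) by (unfold x; ring).
    eapply Rle_lt_trans; [apply Rabs_triang|]. rewrite Rabs_Ropp, (Rabs_right x) by lra. lra. }
  split; [lra|].
  replace (X1 + q - X1)%Z with q by ring. replace (Y1 + p - Y1)%Z with p by ring.
  intros E. assert (Er : IZR q * (IZR Y3 - IZR Y1) = IZR p * (IZR X3 - IZR X1)).
  { rewrite <- !minus_IZR, <- !mult_IZR. f_equal. lia. }
  set (e1 := IZR Y1 - IZR X1 * s - c) in *. set (e3 := IZR Y3 - IZR X3 * s - c) in *.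
  assert (Eq : IZR q * (e3 - e1) = - ((IZR X3 - IZR X1) * x)).
  { unfold e1, e3, x. transitivity (IZR q * (IZR Y3 - IZR Y1) - IZR q * s * (IZR X3 - IZR X1)); [ring|].
    rewrite Er. ring. }
  assert (Hg : (IZR X3 - IZR X1) * x > Rabs (IZR q) * r).
  { replace (Rabs (IZR q) * r) with (Rabs (IZR q) * r / x * x) by (field; lra).
    apply Rmult_gt_compat_r; unfold far in *; lra. }
  assert (Hl : Rabs (IZR q * (e3 - e1)) <= Rabs (IZR q) * (2 * r / 3)).
  { rewrite Rabs_mult. apply Rmult_le_compat_l; [apply Rabs_pos|].
    eapply Rle_trans; [apply Rabs_triang|]. rewrite Rabs_Ropp. lra. }
  rewrite Eq, Rabs_Ropp, Rabs_right in Hl by nra. nra.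
Qed.

Lemma unimod_AZ A T : is_unimod AZ T -> is_unimod A T.
Proof. intros [H1 [H2 H3]]. destruct A; split; auto; simpl; auto. Qed.

(* Lattice points close to an irrational ray from [g] are centres of squares of
   half size in [C]; three non-collinear ones give a lattice triangle. *)
Lemma irrational_slope_not_vertex_free A C g r s : convex C -> square_in C g r ->
  (forall c t, C c -> 0 <= t -> C (fst c + t, snd c + t * s)) -> irrational s -> ~ vertex_free A C.
Proof.
  intros HC Hg Hrec Hirr Hf. pose proof (proj1 Hg) as Hr.
  destruct (irrational_three_points s Hirr (snd g - fst g * s) (r/2) (fst g)) as
    [X1 [Y1 [X2 [Y2 [X3 [Y3 [HX1 [HX2 [HX3 [HE1 [HE2 [HE3 HD]]]]]]]]]]]]; [lra|].
  set (Q := fun x => square_in C x (r/2)).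
  assert (HQ : convex Q).
  { intros x y t Hx Hy Ht. unfold Q. rewrite <- (Rmin_left (r/2) (r/2)) by lra.
    apply square_in_comb2; auto. }
  assert (HP : forall X Y : Z, fst g <= IZR X -> Rabs (IZR Y - IZR X * s - (snd g - fst g * s)) < r/2 ->
                 Q (IZR X, IZR Y)).
  { intros X Y H1 H2. apply (square_in_half C (fst g + (IZR X - fst g), snd g + (IZR X - fst g) * s) r).
    - apply square_in_recession; auto. lra.
    - simpl. replace (IZR X - (fst g + (IZR X - fst g))) with 0 by ring. rewrite Rabs_R0. lra.
    - simpl. replace (IZR Y - (snd g + (IZR X - fst g) * s)) with (IZR Y - IZR X * s - (snd g - fst g * s)) by ring.
      auto. }
  destruct (convex_lattice_triangle_unimodular Q HQ
    (Z.abs_nat ((X2 - X1) * (Y3 - Y1) - (Y2 - Y1) * (X3 - X1))) X1 Y1 (X2 - X1) (Y2 - Y1) (X3 - X1) (Y3 - Y1))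
    as [T [HT [Q0 [Q1 Q2]]]]; [rewrite Zabs2Nat.id_abs; lia|lia|auto|..].
  - replace (X1 + (X2 - X1))%Z with X2 by ring. replace (Y1 + (Y2 - Y1))%Z with Y2 by ring. auto.
  - replace (X1 + (X3 - X1))%Z with X3 by ring. replace (Y1 + (Y3 - Y1))%Z with Y3 by ring. auto.
  - apply Hf. exists T, (r/2). split; [apply unimod_AZ; auto|auto].
Qed.

(** * Quarter turns *)

Definition is_quarter_turn (e1 e2 : Z) : Prop :=
  (e1 = 1 /\ e2 = 0 \/ e1 = 0 /\ e2 = 1 \/ e1 = -1 /\ e2 = 0 \/ e1 = 0 /\ e2 = -1)%Z.

(* Rotation with matrix [[e1, e2], [-e2, e1]]; its inverse is [rot e1 (-e2)]. *)
Definition rot (e1 e2 : Z) (p : pt) : pt :=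
  (IZR e1 * fst p + IZR e2 * snd p, - IZR e2 * fst p + IZR e1 * snd p).

Ltac quarter_turn_cases H := destruct H as [[-> ->]|[[-> ->]|[[-> ->]|[-> ->]]]].

Lemma quarter_turn_opp e1 e2 : is_quarter_turn e1 e2 -> is_quarter_turn e1 (- e2).
Proof. unfold is_quarter_turn. lia. Qed.

Lemma rot_opp_rot e1 e2 p : is_quarter_turn e1 e2 -> rot e1 (- e2) (rot e1 e2 p) = p.
Proof. intros HE. destruct p. unfold rot; simpl. quarter_turn_cases HE; f_equal; simpl; ring. Qed.

Lemma rot_rot_opp e1 e2 p : is_quarter_turn e1 e2 -> rot e1 e2 (rot e1 (- e2) p) = p.
Proof.
  intros HE. rewrite <- (Z.opp_involutive e2) at 1. apply rot_opp_rot, quarter_turn_opp, HE.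
Qed.

Lemma rot_comb e1 e2 x y t :
  rot e1 e2 ((1-t) * fst x + t * fst y, (1-t) * snd x + t * snd y) =
  ((1-t) * fst (rot e1 e2 x) + t * fst (rot e1 e2 y), (1-t) * snd (rot e1 e2 x) + t * snd (rot e1 e2 y)).
Proof. unfold rot; simpl. f_equal; ring. Qed.

Lemma quarter_turn_Rabs e1 e2 a b : is_quarter_turn e1 e2 ->
  (Rabs (IZR e1 * a + IZR e2 * b) = Rabs a /\ Rabs (- IZR e2 * a + IZR e1 * b) = Rabs b) \/
  (Rabs (IZR e1 * a + IZR e2 * b) = Rabs b /\ Rabs (- IZR e2 * a + IZR e1 * b) = Rabs a).
Proof.
  intros HE. quarter_turn_cases HE; [left|right|left|right];
    split; first [f_equal; simpl; ring | rewrite <- Rabs_Ropp; f_equal; simpl; ring].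
Qed.

Lemma in_square_rot e1 e2 x rho y : is_quarter_turn e1 e2 ->
  in_square x rho y -> in_square (rot e1 e2 x) rho (rot e1 e2 y).
Proof.
  intros HE [H1 H2]. unfold in_square, rot; simpl.
  replace (IZR e1 * fst y + IZR e2 * snd y - (IZR e1 * fst x + IZR e2 * snd x))
    with (IZR e1 * (fst y - fst x) + IZR e2 * (snd y - snd x)) by ring.
  replace (- IZR e2 * fst y + IZR e1 * snd y - (- IZR e2 * fst x + IZR e1 * snd x))
    with (- IZR e2 * (fst y - fst x) + IZR e1 * (snd y - snd x)) by ring.
  destruct (quarter_turn_Rabs e1 e2 (fst y - fst x) (snd y - snd x) HE) as [[-> ->]|[-> ->]]; auto.
Qed.

Lemma dist2_rot e1 e2 p q : is_quarter_turn e1 e2 -> dist2 (rot e1 e2 p) (rot e1 e2 q) = dist2 p q.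
Proof. intros HE. unfold dist2, rot; simpl. f_equal. quarter_turn_cases HE; simpl; ring. Qed.

(* [rot e1 (-e2) \o T] *)
Definition rot_unimod (e1 e2 : Z) (T : unimod) : unimod :=
  {| m11 := e1 * m11 T - e2 * m21 T; m12 := e1 * m12 T - e2 * m22 T;
     m21 := e2 * m11 T + e1 * m21 T; m22 := e2 * m12 T + e1 * m22 T;
     b1 := IZR e1 * b1 T - IZR e2 * b2 T; b2 := IZR e2 * b1 T + IZR e1 * b2 T |}.

Lemma apply_rot_unimod e1 e2 T u : apply_unimod (rot_unimod e1 e2 T) u = rot e1 (- e2) (apply_unimod T u).
Proof.
  unfold apply_unimod, rot_unimod, rot; simpl. rewrite opp_IZR, !minus_IZR, !plus_IZR, !mult_IZR.
  f_equal; ring.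
Qed.

Lemma rot_unimod_unimod e1 e2 A T : is_quarter_turn e1 e2 -> is_unimod A T ->
  is_unimod A (rot_unimod e1 e2 T).
Proof.
  intros HE [Hd [H1 H2]]. split.
  - simpl. quarter_turn_cases HE; lia.
  - destruct A; simpl in *; auto. destruct H1 as [z1 E1], H2 as [z2 E2]. rewrite E1, E2. split.
    + exists (e1 * z1 - e2 * z2)%Z. rewrite minus_IZR, !mult_IZR; ring.
    + exists (e2 * z1 + e1 * z2)%Z. rewrite plus_IZR, !mult_IZR; ring.
Qed.

Section QuarterTurn.
Variables (e1 e2 : Z) (C : pset).
Hypothesis HE : is_quarter_turn e1 e2.
Let C' := fun q => C (rot e1 (- e2) q).

Lemma rot_closed : closed_set C -> closed_set C'.
Proof.
  intros Hc q Hq. destruct (Hc _ Hq) as [e [He Hb]]. exists e. split; auto.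
  intros q' Hd. apply Hb. rewrite dist2_rot; auto using quarter_turn_opp.
Qed.

Lemma rot_convex : convex C -> convex C'.
Proof.
  intros Hv x y t Hx Hy Ht. unfold C'.
  change (padd (pscale (1 - t) x) (pscale t y)) with ((1-t) * fst x + t * fst y, (1-t) * snd x + t * snd y).
  rewrite rot_comb. exact (Hv _ _ t Hx Hy Ht).
Qed.

Lemma rot_square_in g r : square_in C g r -> square_in C' (rot e1 e2 g) r.
Proof.
  intros [Hr HC]. split; auto. intros y Hy. apply HC.
  rewrite <- (rot_opp_rot e1 e2 g HE). apply in_square_rot; auto using quarter_turn_opp.
Qed.

Lemma rot_vertex_free A : vertex_free A C -> vertex_free A C'.
Proof.
  intros Hf [T [rho [HT [S0 [S1 S2]]]]]. apply Hf. exists (rot_unimod e1 e2 T), rho.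
  split; [apply rot_unimod_unimod; auto|].
  assert (Hback : forall u, square_in C' (apply_unimod T u) rho -> square_in C (apply_unimod (rot_unimod e1 e2 T) u) rho).
  { intros u [Hr HC]. split; auto. intros y Hy. rewrite <- (rot_opp_rot e1 e2 y HE).
    apply HC. rewrite apply_rot_unimod in Hy.
    rewrite <- (rot_rot_opp e1 e2 (apply_unimod T u) HE). apply in_square_rot; auto. }
  auto.
Qed.

Lemma rot_strip_back A T : set_sub C' (image T (strip A)) -> set_sub C (image (rot_unimod e1 e2 T) (strip A)).
Proof.
  intros Hs c Hc. assert (Hc' : C' (rot e1 e2 c)) by (unfold C'; rewrite rot_opp_rot; auto).
  destruct (Hs _ Hc') as [u [Hu Eu]]. exists u. split; auto.
  rewrite apply_rot_unimod, <- Eu, rot_opp_rot; auto.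
Qed.

End QuarterTurn.

Definition in_cone_beyond (g p : pt) (R0 : R) : Prop :=
  fst p - fst g >= R0 /\ Rabs (snd p - snd g) <= fst p - fst g.

Lemma in_cone_beyond_some_turn g p R0 :
  Rabs R0 < Rabs (fst p - fst g) \/ Rabs R0 < Rabs (snd p - snd g) ->
  exists e1 e2, is_quarter_turn e1 e2 /\ in_cone_beyond (rot e1 e2 g) (rot e1 e2 p) R0.
Proof.
  intros Hfar. pose proof (Rle_abs R0).
  assert (Hrot : forall e1 e2, fst (rot e1 e2 p) - fst (rot e1 e2 g) = IZR e1 * (fst p - fst g) + IZR e2 * (snd p - snd g)
    /\ snd (rot e1 e2 p) - snd (rot e1 e2 g) = - IZR e2 * (fst p - fst g) + IZR e1 * (snd p - snd g))
    by (intros; unfold rot; simpl; split; ring).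
  set (dx := fst p - fst g) in *. set (dy := snd p - snd g) in *.
  assert (Hcase : forall e1 e2 u v, is_quarter_turn e1 e2 ->
      IZR e1 * dx + IZR e2 * dy = u -> - IZR e2 * dx + IZR e1 * dy = v ->
      u >= R0 -> Rabs v <= u ->
      exists e1 e2, is_quarter_turn e1 e2 /\ in_cone_beyond (rot e1 e2 g) (rot e1 e2 p) R0).
  { intros e1 e2 u v HE Eu Ev H1 H2. exists e1, e2. split; auto.
    unfold in_cone_beyond. destruct (Hrot e1 e2) as [-> ->]. rewrite Eu, Ev. auto. }
  destruct (Rle_dec (Rabs dy) (Rabs dx)); [destruct (Rle_dec 0 dx)|destruct (Rle_dec 0 dy)].
  - apply (Hcase 1%Z 0%Z dx dy); [left; auto|simpl; ring|simpl; ring|..]; rewrite (Rabs_right dx) in * by lra; lra.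
  - apply (Hcase (-1)%Z 0%Z (- dx) (- dy)); [do 2 right; left; auto|simpl; ring|simpl; ring|..];
      rewrite ?Rabs_Ropp, (Rabs_left dx) in * by lra; lra.
  - apply (Hcase 0%Z 1%Z dy (- dx)); [right; left; auto|simpl; ring|simpl; ring|..];
      rewrite ?Rabs_Ropp, (Rabs_right dy) in * by lra; lra.
  - apply (Hcase 0%Z (-1)%Z (- dy) dx); [do 3 right; auto|simpl; ring|simpl; ring|..];
      rewrite (Rabs_left dy) in * by lra; lra.
Qed.

Lemma unbounded_far_in_turned_cone C g : unbounded C ->
  exists e1 e2, is_quarter_turn e1 e2 /\ far_in_cone (fun q => C (rot e1 (- e2) q)) (rot e1 e2 g).
Proof.
  intros Hu.
  set (cone e1 e2 R0 := exists p, C p /\ in_cone_beyond (rot e1 e2 g) (rot e1 e2 p) R0).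
  assert (Hall : forall R0, exists e1 e2, is_quarter_turn e1 e2 /\ cone e1 e2 R0).
  { intros R0. apply NNPP; intro Hn. apply Hu.
    exists (Rabs R0 + Rabs (fst g) + Rabs (snd g)). intros p Hp. apply NNPP; intro Hb. apply Hn.
    destruct (in_cone_beyond_some_turn g p R0) as [e1 [e2 [HE Hc]]].
    { pose proof (Rabs_triang_inv (fst p) (fst g)). pose proof (Rabs_triang_inv (snd p) (snd g)).
      pose proof (Rabs_pos (fst g)); pose proof (Rabs_pos (snd g)).
      destruct (Rle_dec (Rabs (fst p)) (Rabs R0 + Rabs (fst g) + Rabs (snd g))); [|left; lra].
      destruct (Rle_dec (Rabs (snd p)) (Rabs R0 + Rabs (fst g) + Rabs (snd g))); [|right; lra].
      exfalso; apply Hb; split; auto. }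
    exists e1, e2. split; [exact HE|exists p; auto]. }
  assert (Hmono : forall e1 e2 R1 R2, R1 <= R2 -> cone e1 e2 R2 -> cone e1 e2 R1).
  { intros e1 e2 R1 R2 H [p [Hp [H1 H2]]]. exists p. split; [auto|split; [lra|auto]]. }
  assert (Hturn : exists e1 e2, is_quarter_turn e1 e2 /\ forall R0, cone e1 e2 R0).
  { apply NNPP; intro Hn.
    assert (Hbound : forall e1 e2, is_quarter_turn e1 e2 -> exists R0, ~ cone e1 e2 R0).
    { intros e1 e2 HE. apply NNPP; intro H. apply Hn. exists e1, e2. split; auto.
      intros R0. apply NNPP; intro H'. apply H. exists R0; auto. }
    destruct (Hbound 1 0)%Z as [R1 H1]; [left; auto|].
    destruct (Hbound 0 1)%Z as [R2 H2]; [right; left; auto|].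
    destruct (Hbound (-1) 0)%Z as [R3 H3]; [do 2 right; left; auto|].
    destruct (Hbound 0 (-1))%Z as [R4 H4]; [do 3 right; auto|].
    destruct (Hall (Rmax (Rmax R1 R2) (Rmax R3 R4))) as [e1 [e2 [HE Hc]]].
    pose proof (Rmax_l (Rmax R1 R2) (Rmax R3 R4)); pose proof (Rmax_r (Rmax R1 R2) (Rmax R3 R4)).
    pose proof (Rmax_l R1 R2); pose proof (Rmax_r R1 R2); pose proof (Rmax_l R3 R4); pose proof (Rmax_r R3 R4).
    quarter_turn_cases HE; eapply Hmono in Hc; eauto; lra. }
  destruct Hturn as [e1 [e2 [HE Hc]]]. exists e1, e2. split; [exact HE|].
  intros R0. destruct (Hc R0) as [p [Hp Hin]]. exists (rot e1 e2 p). rewrite rot_opp_rot by exact HE. auto.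
Qed.

(** * Classification *)

Lemma rational_lowest_terms s : ~ irrational s ->
  exists p q a b : Z, (0 < q)%Z /\ s = IZR p / IZR q /\ (a * p - b * q = 1)%Z.
Proof.
  intros Hrat. apply NNPP in Hrat. destruct Hrat as [p [q [Hq ->]]].
  set (d := Z.gcd p q).
  assert (Hd : (0 < d)%Z).
  { pose proof (Z.gcd_nonneg p q). destruct (Z.eq_dec d 0) as [E|E]; [apply Z.gcd_eq_0 in E|]; lia. }
  destruct (Z.gcd_divide_l p q) as [p' Ep]. destruct (Z.gcd_divide_r p q) as [q' Eq]. fold d in Ep, Eq.
  assert (Hgcd : Z.gcd p' q' = 1%Z).
  { pose proof (Z.gcd_div_gcd p q d ltac:(lia) eq_refl) as H.
    rewrite Ep, Eq, !Z.div_mul in H by lia. exact H. }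
  destruct (Z.gcd_bezout p' q' 1 Hgcd) as [u [v Huv]].
  exists p', q', u, (- v)%Z. split; [nia|split; [|lia]].
  rewrite Ep, Eq, !mult_IZR. field. split; apply not_0_IZR; nia.
Qed.

Lemma far_in_cone_in_strip A C g r : closed_set C -> convex C -> square_in C g r ->
  far_in_cone C g -> vertex_free A C -> exists T, is_unimod A T /\ set_sub C (image T (strip A)).
Proof.
  intros Hc HC Hg Hfar Hf.
  destruct (far_in_cone_slope C g Hfar) as [s Hs].
  pose proof (closed_convex_ray C g s Hc HC (square_in_center _ _ _ Hg) Hs) as Hray.
  pose proof (closed_convex_recession C g s Hc HC Hray) as Hrec.
  destruct (classic (irrational s)) as [Hirr|Hrat].
  - exfalso. exact (irrational_slope_not_vertex_free A C g r s HC Hg Hrec Hirr Hf).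
  - destruct (rational_lowest_terms s Hrat) as [p [q [a [b [Hq [-> Hbez]]]]]].
    exact (rational_slope_in_strip C g r p q a b HC Hg Hq Hbez Hrec A Hf).
Qed.

Lemma maximal_free_strip_image A C : closed_convex C -> two_dim C -> unbounded C ->
  maximal_free A Delta2 C -> exists T, is_unimod A T /\ set_eq C (image T (strip A)).
Proof.
  intros [Hc HC] H2 Hu [_ [Hfree Hmax]].
  destruct (two_dim_square_in C HC H2) as [g [r Hg]].
  destruct (unbounded_far_in_turned_cone C g Hu) as [e1 [e2 [HE Hfar]]].
  destruct (far_in_cone_in_strip A (fun q => C (rot e1 (- e2) q)) (rot e1 e2 g) r) as [T [HT Hsub]].
  - apply rot_closed; auto.
  - apply rot_convex; auto.
  - apply rot_square_in; auto.
  - exact Hfar.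
  - apply rot_vertex_free, free_vertex_free; auto.
  - assert (HT' := rot_unimod_unimod e1 e2 A T HE HT).
    exists (rot_unimod e1 e2 T). split; [exact HT'|].
    pose proof (rot_strip_back e1 e2 C HE A T Hsub) as HCL.
    assert (HLC : set_sub (image (rot_unimod e1 e2 T) (strip A)) C).
    { apply Hmax; auto. split; [apply strip_image_closed|apply strip_image_convex]; auto.
      apply strip_image_free; auto. }
    intros p; split; auto.
Qed.

Lemma set_eq_eq (X Y : pset) : set_eq X Y -> X = Y.
Proof. intros H. apply functional_extensionality. intros p. apply propositional_extensionality, H. Qed.

Theorem proposition3p3 (A : coeffs) :
  (forall C : pset,
     (closed_convex C /\ two_dim C /\ unbounded C /\ maximal_free A Delta2 C)
     <-> exists T, is_unimod A T /\ set_eq C (image T (strip A)))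
  /\
  (forall C : pset,
     closed_convex C /\ two_dim C /\ unbounded C /\ maximal_free A Delta2 C ->
     lattice_width C = Finite (strip_width A)).
Proof.
  split.
  - intros C. split.
    + intros [Hcc [H2 [Hu Hmax]]]. exact (maximal_free_strip_image A C Hcc H2 Hu Hmax).
    + intros [T [HT HC]]. apply set_eq_eq in HC. subst C.
      assert (Hcc : closed_convex (image T (strip A)))
        by (split; [apply strip_image_closed|apply strip_image_convex]; auto).
      split; [exact Hcc|]. split; [apply strip_image_two_dim; auto|].
      split; [apply strip_image_unbounded; auto|].
      split; [exact Hcc|]. split; [apply strip_image_free; auto|].
      intros K HK Hf. apply strip_image_maximal; auto.
  - intros C [Hcc [H2 [Hu Hmax]]].
    destruct (maximal_free_strip_image A C Hcc H2 Hu Hmax) as [T [HT HC]].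
    apply set_eq_eq in HC. subst C. apply strip_image_width, HT.
Qed.
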